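(* Let $(u,\phi,\theta,\eta)$ be a solution of the system $\rho u_{tt}=\mu u_{xx}+b\phi_x$, $J\phi_{tt}=\alpha\phi_{xx}-bu_x-\xi\phi-\beta\theta_x$, $c\theta_t=-\beta\phi_{xt}+\int_0^\infty\kappa(s)\eta_{xx}(x,s)ds$, $\eta_t=\theta-\eta_s$ on $(0,\pi)\times(0,\infty)$ with boundary conditions $u=\phi_x=\theta=0$ at $x=0,\pi$, $\eta(0,s)=\eta(\pi,s)=0$, $\eta(x,0)=0$. Then the functional \[ F_1(t)=-\frac{2c}{g(0)}\int_0^{+\infty}\kappa(s)\langle\theta(t),\eta^t(s)\rangle ds \] satisfies, for every $\varepsilon_1>0$, \[ \frac{d}{dt}F_1(t)\le-c\|\theta\|^2-\|\eta\|_{\mathcal V}^2+\varepsilon_1\|\phi_t\|^2-M\Big(1+\frac1{\varepsilon_1}\Big)\int_0^{+\infty}\kappa'(s)\|\eta_x(s)\|^2ds, \] where $M>0$ is a constant independent of $\varepsilon_1$.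
   Context: $\rho,J,c,\mu,b,\alpha,\xi$ are positive constants with $\mu\xi>b^2$; $\beta\ne0$ real. $\kappa$ satisfies (h1) $\kappa\in C([0,\infty))\cap L^1(0,\infty)$; (h2) $\kappa>0$, $\kappa'\le0$; (h3) $g(0):=\int_0^\infty\kappa(s)ds$; (h4) $\kappa'\le-\delta\kappa$ for some $\delta>0$. $\eta=\eta^t(x,s)=\int_0^s\theta(x,t-\tau)d\tau$. $\langle\cdot,\cdot\rangle,\|\cdot\|$ are the $L^2(0,\pi)$ inner product and norm; $\|\eta\|_{\mathcal V}^2=\int_0^\infty\kappa(s)\|\eta_x(s)\|^2ds$. Solutions are sufficiently regular (strong) solutions so that differentiation is legitimate. *)

From Stdlib Require Import Reals.
From Coquelicot Require Import Coquelicot.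
Open Scope R_scope.

Definition Iinf (f : R -> R) : R :=
  RInt_gen f (at_point 0) (Rbar_locally p_infty).

Definition ip (f g : R -> R) : R := RInt (fun x => f x * g x) 0 PI.
Definition nrm2 (f : R -> R) : R := ip f f.

Definition dx (f : R -> R -> R) : R -> R -> R :=
  fun x t => Derive (fun y => f y t) x.
Definition dt (f : R -> R -> R) : R -> R -> R :=
  fun x t => Derive (fun y => f x y) t.

Definition dx3 (f : R -> R -> R -> R) : R -> R -> R -> R :=
  fun x s t => Derive (fun y => f y s t) x.
Definition ds3 (f : R -> R -> R -> R) : R -> R -> R -> R :=
  fun x s t => Derive (fun y => f x y t) s.
Definition dt3 (f : R -> R -> R -> R) : R -> R -> R -> R :=
  fun x s t => Derive (fun y => f x s y) t.

Definition cont2 (f : R -> R -> R) : Prop :=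
  forall x t, continuous (fun p : R * R => f (fst p) (snd p)) (x, t).
Definition cont3 (f : R -> R -> R -> R) : Prop :=
  forall x s t, continuous (fun p : R * R * R => f (fst (fst p)) (snd (fst p)) (snd p)) (x, s, t).

Definition C2 (f : R -> R -> R) : Prop :=
  (forall x t, ex_derive (fun y => f y t) x) /\
  (forall x t, ex_derive (fun y => f x y) t) /\
  (forall x t, ex_derive (fun y => dx f y t) x) /\
  (forall x t, ex_derive (fun y => dx f x y) t) /\
  (forall x t, ex_derive (fun y => dt f y t) x) /\
  (forall x t, ex_derive (fun y => dt f x y) t) /\
  cont2 f /\ cont2 (dx f) /\ cont2 (dt f) /\
  cont2 (dx (dx f)) /\ cont2 (dt (dx f)) /\
  cont2 (dx (dt f)) /\ cont2 (dt (dt f)).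

(* regularity of the memory variable eta(x,s,t) = eta^t(x,s) *)
Definition eta_regular (eta : R -> R -> R -> R) : Prop :=
  (forall x s t, ex_derive (fun y => eta y s t) x) /\
  (forall x s t, ex_derive (fun y => dx3 eta y s t) x) /\
  (forall x s t, ex_derive (fun y => eta x y t) s) /\
  (forall x s t, ex_derive (fun y => eta x s y) t) /\
  cont3 eta /\ cont3 (dx3 eta) /\ cont3 (dx3 (dx3 eta)) /\
  cont3 (ds3 eta) /\ cont3 (dt3 eta) /\
  (forall T, 0 < T -> exists B, forall x s t,
     0 <= x <= PI -> 0 <= s -> 0 < t <= T ->
     Rabs (eta x s t) <= B * (1 + s) /\
     Rabs (dx3 eta x s t) <= B * (1 + s) /\
     Rabs (dx3 (dx3 eta) x s t) <= B * (1 + s) /\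
     Rabs (ds3 eta x s t) <= B * (1 + s) /\
     Rabs (dt3 eta x s t) <= B * (1 + s)).

Definition is_solution (rho J c mu b alpha xi beta : R) (kappa : R -> R)
  (u phi theta : R -> R -> R) (eta : R -> R -> R -> R) : Prop :=
  C2 u /\ C2 phi /\ C2 theta /\ eta_regular eta /\
  (forall x t, 0 < x < PI -> 0 < t ->
     rho * dt (dt u) x t = mu * dx (dx u) x t + b * dx phi x t) /\
  (forall x t, 0 < x < PI -> 0 < t ->
     J * dt (dt phi) x t = alpha * dx (dx phi) x t - b * dx u x t
                           - xi * phi x t - beta * dx theta x t) /\
  (forall x t, 0 < x < PI -> 0 < t ->
     c * dt theta x t = - beta * dt (dx phi) x t
                        + Iinf (fun s => kappa s * dx3 (dx3 eta) x s t)) /\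
  (forall x s t, 0 < x < PI -> 0 < s -> 0 < t ->
     dt3 eta x s t = theta x t - ds3 eta x s t) /\
  (forall t, 0 < t ->
     u 0 t = 0 /\ u PI t = 0 /\ dx phi 0 t = 0 /\ dx phi PI t = 0 /\
     theta 0 t = 0 /\ theta PI t = 0) /\
  (forall s t, 0 <= s -> 0 < t -> eta 0 s t = 0 /\ eta PI s t = 0) /\
  (forall x t, 0 < t -> eta x 0 t = 0).

(* hypotheses (h1)-(h4) on the kernel; kappa is taken C^1 on [0,oo)
   so that kappa' makes sense *)
Definition kernel_hyp (kappa : R -> R) (delta : R) : Prop :=
  (forall s, 0 <= s -> ex_derive kappa s) /\
  (forall s, 0 <= s -> continuous (Derive kappa) s) /\
  ex_RInt_gen kappa (at_point 0) (Rbar_locally p_infty) /\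
  (forall s, 0 <= s -> 0 < kappa s) /\
  (forall s, 0 <= s -> Derive kappa s <= 0) /\
  0 < delta /\
  (forall s, 0 <= s -> Derive kappa s <= - delta * kappa s).

Definition g0 (kappa : R -> R) : R := Iinf kappa.

Definition F1 (c : R) (kappa : R -> R) (theta : R -> R -> R)
  (eta : R -> R -> R -> R) (t : R) : R :=
  - (2 * c / g0 kappa) *
    Iinf (fun s => kappa s * ip (fun x => theta x t) (fun x => eta x s t)).

Definition normV2 (kappa : R -> R) (eta : R -> R -> R -> R) (t : R) : R :=
  Iinf (fun s => kappa s * nrm2 (fun x => dx3 eta x s t)).

From Stdlib Require Import Reals Lra Classical ClassicalEpsilon.
From Coquelicot Require Import Coquelicot.
Open Scope R_scope.

(* Differentiating under the integral sign (the integrand and its t-derivative are dominated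
   by C kappa(s) (1 + s), which is integrable because kappa' <= - delta kappa) gives
   F_1' = -(2c/g(0)) int kappa (<theta_t, eta> + <theta, eta_t>).  The theta-equation,
   integration by parts in x and eta_t = theta - eta_s turn the integrand into
   kappa (beta <phi_t, eta_x> - <int kappa eta_x, eta_x> + c |theta|^2) - c kappa <theta, eta_s>.
   The last term is integrated by parts in s (eta^t(0) = 0 and kappa(s)(1 + s) -> 0), which
   produces int kappa' <theta, eta>, estimated by Young and Poincare.  What remains is absorbed
   by - c |theta|^2, eps1 |phi_t|^2 and, since delta |eta|_V^2 <= - int kappa' |eta_x|^2,
   by the last term. *)

Local Notation pinf := (Rbar_locally p_infty).

(* Coquelicot states these for abstract modules ([plus], [scal], ...); the copies below are
   phrased with [Rplus] and [Rmult] so that they rewrite and apply on real expressions. *)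

Lemma continuous_plus_R {U : UniformSpace} (f g : U -> R) x :
  continuous f x -> continuous g x -> continuous (fun y => f y + g y) x.
Proof. exact (continuous_plus f g x). Qed.

Lemma continuous_minus_R {U : UniformSpace} (f g : U -> R) x :
  continuous f x -> continuous g x -> continuous (fun y => f y - g y) x.
Proof. exact (continuous_minus f g x). Qed.

Lemma continuous_mult_R {U : UniformSpace} (f g : U -> R) x :
  continuous f x -> continuous g x -> continuous (fun y => f y * g y) x.
Proof. exact (continuous_mult f g x). Qed.

Lemma continuous_abs_R {U : UniformSpace} (f : U -> R) x :
  continuous f x -> continuous (fun y => Rabs (f y)) x.
Proof. intros Hf. exact (continuous_comp f Rabs x Hf (continuous_Rabs _)). Qed.

Lemma continuous_Rmax {U : UniformSpace} (f g : U -> R) x :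
  continuous f x -> continuous g x -> continuous (fun y => Rmax (f y) (g y)) x.
Proof.
  intros Hf Hg.
  assert (Hmax : forall a b, Rmax a b = (a + b + Rabs (a - b)) * / 2).
  { intros a b. unfold Rmax. destruct Rle_dec.
    - rewrite Rabs_left1 by lra. field.
    - rewrite Rabs_right by lra. field. }
  apply (continuous_ext (fun y => (f y + g y + Rabs (f y - g y)) * / 2)).
  - intros y. rewrite Hmax. reflexivity.
  - apply continuous_mult_R; [|apply continuous_const].
    apply continuous_plus_R; [apply continuous_plus_R; auto|].
    apply continuous_abs_R, continuous_minus_R; auto.
Qed.

Lemma continuous_Rmin {U : UniformSpace} (f g : U -> R) x :
  continuous f x -> continuous g x -> continuous (fun y => Rmin (f y) (g y)) x.
Proof.
  intros Hf Hg.
  apply (continuous_ext (fun y => - Rmax (- f y) (- g y))).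
  - intros y. assert (E : - Rmax (- f y) (- g y) = Rmin (f y) (g y))
      by (unfold Rmax, Rmin; repeat destruct Rle_dec; lra).
    rewrite E. reflexivity.
  - apply (continuous_opp (fun y => Rmax (- f y) (- g y))).
    apply continuous_Rmax; apply (continuous_opp (V := R_NormedModule)); auto.
Qed.

Definition clamp (a b x : R) : R := Rmax a (Rmin b x).

Lemma continuous_clamp a b x : continuous (clamp a b) x.
Proof. apply continuous_Rmax, continuous_Rmin; auto using continuous_const, continuous_id. Qed.

Lemma clamp_in a b x : a <= b -> a <= clamp a b x <= b.
Proof. intros Hab. unfold clamp, Rmax, Rmin. repeat destruct Rle_dec; lra. Qed.

Lemma clamp_id a b x : a <= x <= b -> clamp a b x = x.
Proof. intros Hx. unfold clamp, Rmax, Rmin. repeat destruct Rle_dec; lra. Qed.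

Lemma ex_derive_continuous_R (f : R -> R) x : ex_derive f x -> continuous f x.
Proof. exact (ex_derive_continuous (K := R_AbsRing) (V := R_NormedModule) f x). Qed.

Lemma is_derive_mult_R (f g : R -> R) x df dg :
  is_derive f x df -> is_derive g x dg ->
  is_derive (fun y => f y * g y) x (df * g x + f x * dg).
Proof. intros Hf Hg. exact (is_derive_mult f g x df dg Hf Hg Rmult_comm). Qed.

Lemma ex_RInt_continuous_R (f : R -> R) a b :
  (forall z, Rmin a b <= z <= Rmax a b -> continuous f z) -> ex_RInt f a b.
Proof. exact (ex_RInt_continuous (V := R_CompleteNormedModule) f a b). Qed.

Lemma ex_RInt_continuous_le (f : R -> R) a b :
  a <= b -> (forall z, a <= z <= b -> continuous f z) -> ex_RInt f a b.
Proof.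
  intros Hab Hf. apply ex_RInt_continuous_R. intros z Hz.
  rewrite Rmin_left, Rmax_right in Hz by lra. auto.
Qed.

Lemma ex_RInt_plus_R (f g : R -> R) a b :
  ex_RInt f a b -> ex_RInt g a b -> ex_RInt (fun x => f x + g x) a b.
Proof. exact (ex_RInt_plus f g a b). Qed.

Lemma ex_RInt_minus_R (f g : R -> R) a b :
  ex_RInt f a b -> ex_RInt g a b -> ex_RInt (fun x => f x - g x) a b.
Proof. exact (ex_RInt_minus f g a b). Qed.

Lemma ex_RInt_scal_R (f : R -> R) k a b : ex_RInt f a b -> ex_RInt (fun x => k * f x) a b.
Proof. exact (ex_RInt_scal f a b k). Qed.

Lemma ex_RInt_Chasles_2_R (f : R -> R) a b c :
  a <= b <= c -> ex_RInt f a c -> ex_RInt f b c.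
Proof. exact (ex_RInt_Chasles_2 (V := R_CompleteNormedModule) f a b c). Qed.

Lemma RInt_ext_R (f g : R -> R) a b :
  (forall x, Rmin a b < x < Rmax a b -> f x = g x) -> RInt f a b = RInt g a b.
Proof. exact (RInt_ext f g a b). Qed.

Lemma ex_RInt_ext_R (f g : R -> R) a b :
  (forall x, Rmin a b < x < Rmax a b -> f x = g x) -> ex_RInt f a b -> ex_RInt g a b.
Proof. exact (ex_RInt_ext f g a b). Qed.

Lemma RInt_plus_R (f g : R -> R) a b : ex_RInt f a b -> ex_RInt g a b ->
  RInt (fun x => f x + g x) a b = RInt f a b + RInt g a b.
Proof. exact (RInt_plus f g a b). Qed.

Lemma RInt_minus_R (f g : R -> R) a b : ex_RInt f a b -> ex_RInt g a b ->
  RInt (fun x => f x - g x) a b = RInt f a b - RInt g a b.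
Proof. exact (RInt_minus f g a b). Qed.

Lemma RInt_scal_R (f : R -> R) k a b : ex_RInt f a b ->
  RInt (fun x => k * f x) a b = k * RInt f a b.
Proof. exact (RInt_scal f a b k). Qed.

Lemma RInt_const_R (c a b : R) : RInt (fun _ => c) a b = (b - a) * c.
Proof. exact (RInt_const a b c). Qed.

Lemma RInt_Chasles_R (f : R -> R) a b c : ex_RInt f a b -> ex_RInt f b c ->
  RInt f a b + RInt f b c = RInt f a c.
Proof. exact (RInt_Chasles f a b c). Qed.

Lemma RInt_swap_R (f : R -> R) a b : ex_RInt f a b -> RInt f b a = - RInt f a b.
Proof. intros H. symmetry. exact (opp_RInt_swap (V := R_CompleteNormedModule) f a b H). Qed.

Lemma RInt_correct_R (f : R -> R) a b : ex_RInt f a b -> is_RInt f a b (RInt f a b).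
Proof. exact (RInt_correct (V := R_CompleteNormedModule) f a b). Qed.

Lemma is_RInt_unique_R (f : R -> R) a b l : is_RInt f a b l -> RInt f a b = l.
Proof. exact (is_RInt_unique (V := R_CompleteNormedModule) f a b l). Qed.

Lemma abs_RInt_le_RInt (f g : R -> R) a b : a <= b -> ex_RInt f a b -> ex_RInt g a b ->
  (forall x, a <= x <= b -> Rabs (f x) <= g x) -> Rabs (RInt f a b) <= RInt g a b.
Proof.
  intros Hab Hf Hg H. apply (norm_RInt_le f g a b); auto; apply RInt_correct_R; auto.
Qed.

Lemma RInt_derive_R (f df : R -> R) a b :
  (forall x, Rmin a b <= x <= Rmax a b -> is_derive f x (df x)) ->
  (forall x, Rmin a b <= x <= Rmax a b -> continuous df x) ->
  RInt df a b = f b - f a.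
Proof. intros Hd Hc. apply is_RInt_unique_R. exact (is_RInt_derive f df a b Hd Hc). Qed.

Lemma filterlim_plus_R {T} {F} {FF : Filter F} (u v : T -> R) a b :
  filterlim u F (locally a) -> filterlim v F (locally b) ->
  filterlim (fun z => u z + v z) F (locally (a + b)).
Proof. intros Hu Hv. exact (filterlim_comp_2 u v Rplus Hu Hv (filterlim_plus a b)). Qed.

Lemma filterlim_scal_R {T} {F} {FF : Filter F} (u : T -> R) k a :
  filterlim u F (locally a) -> filterlim (fun z => k * u z) F (locally (k * a)).
Proof. intros Hu. exact (filterlim_comp _ _ _ u (Rmult k) F _ _ Hu (filterlim_scal_r k a)). Qed.

Lemma filterlim_minus_R {T} {F} {FF : Filter F} (u v : T -> R) a b :
  filterlim u F (locally a) -> filterlim v F (locally b) ->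
  filterlim (fun z => u z - v z) F (locally (a - b)).
Proof.
  intros Hu Hv. apply (filterlim_ext (fun z => u z + -1 * v z)); [intros; ring|].
  replace (a - b) with (a + -1 * b) by ring.
  apply filterlim_plus_R; [|apply filterlim_scal_R]; auto.
Qed.

Lemma filterlim_le_R {T} {F} {FF : ProperFilter' F} (u v : T -> R) a b :
  filterlim u F (locally a) -> filterlim v F (locally b) ->
  F (fun z => u z <= v z) -> a <= b.
Proof. intros Hu Hv H. exact (filterlim_le u v a b H Hu Hv). Qed.

Lemma filterlim_abs_le_R {T} {F} {FF : ProperFilter' F} (u : T -> R) a K :
  filterlim u F (locally a) -> F (fun z => Rabs (u z) <= K) -> Rabs a <= K.
Proof.
  intros Hu H. pose proof (filter_filter' (F := F)) as HF.
  assert (Hb : F (fun z => - K <= u z <= K)).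
  { revert H. apply filter_imp. intros z. apply Rabs_le_between. }
  apply Rabs_le. split.
  - apply (filterlim_le_R (fun _ => - K) u _ a (filterlim_const _) Hu).
    revert Hb. apply filter_imp. tauto.
  - apply (filterlim_le_R u (fun _ => K) a _ Hu (filterlim_const _)).
    revert Hb. apply filter_imp. tauto.
Qed.

Lemma filterlim_squeeze_0 {T} {F} {FF : Filter F} (f g : T -> R) C :
  filterlim g F (locally 0) -> F (fun y => Rabs (f y) <= C * Rabs (g y)) ->
  filterlim f F (locally 0).
Proof.
  intros Hg Hb. apply filterlim_locally. intros eps.
  assert (HC : 0 < Rabs C + 1) by (pose proof (Rabs_pos C); lra).
  assert (He : 0 < eps / (Rabs C + 1)) by (apply Rdiv_lt_0_compat; [apply cond_pos | lra]).
  apply filterlim_locally with (eps := mkposreal _ He) in Hg.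
  generalize (filter_and _ _ Hg Hb). apply filter_imp. intros y [H1 H2].
  change (Rabs (g y - 0) < eps / (Rabs C + 1)) in H1. change (Rabs (f y - 0) < eps).
  rewrite Rminus_0_r in *.
  assert (C * Rabs (g y) <= Rabs C * (eps / (Rabs C + 1))).
  { apply Rle_trans with (Rabs C * Rabs (g y)).
    - apply Rmult_le_compat_r; [apply Rabs_pos | apply Rle_abs].
    - apply Rmult_le_compat_l; [apply Rabs_pos | lra]. }
  assert (Rabs C * (eps / (Rabs C + 1)) < eps).
  { apply Rlt_le_trans with ((Rabs C + 1) * (eps / (Rabs C + 1))).
    - apply Rmult_lt_compat_r; lra.
    - right; field; lra. }
  lra.
Qed.

Lemma p_infty_ge (M : R) : pinf (fun z => M <= z).
Proof. exists M. intros; lra. Qed.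

#[local] Instance Rbar_locally_p_infty_proper : ProperFilter' pinf :=
  Proper_StrongProper _ (Rbar_locally_filter p_infty).

(** * Integrals depending continuously on a parameter *)

Definition jointly_continuous {P : UniformSpace} (F : R -> P -> R) : Prop :=
  forall x p, continuous (fun z : R * P => F (fst z) (snd z)) (x, p).

Lemma continuous_pair {U V W : UniformSpace} (f : U -> V) (g : U -> W) x :
  continuous f x -> continuous g x -> continuous (fun y => (f y, g y)) x.
Proof.
  intros Hf Hg. apply (continuous_comp_2 f g pair); auto.
  intros Q [e He]. exists e. intros z Hz. apply He. exact Hz.
Qed.

Lemma jointly_continuous_l {P : UniformSpace} (F : R -> P -> R) p x :
  jointly_continuous F -> continuous (fun y => F y p) x.
Proof.
  intros H. apply (continuous_comp (fun y => (y, p)) (fun z : R * P => F (fst z) (snd z))).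
  - apply continuous_pair; [apply continuous_id | apply continuous_const].
  - apply H.
Qed.

Lemma jointly_continuous_r {P : UniformSpace} (F : R -> P -> R) x p :
  jointly_continuous F -> continuous (fun q => F x q) p.
Proof.
  intros H. apply (continuous_comp (fun q => (x, q)) (fun z : R * P => F (fst z) (snd z))).
  - apply continuous_pair; [apply continuous_const | apply continuous_id].
  - apply H.
Qed.

Lemma jointly_continuous_ex_RInt {P : UniformSpace} (F : R -> P -> R) p a b :
  jointly_continuous F -> ex_RInt (fun y => F y p) a b.
Proof. intros H. apply ex_RInt_continuous_R. intros z _. apply jointly_continuous_l, H. Qed.

Lemma jointly_continuous_plus {P : UniformSpace} (F G : R -> P -> R) :
  jointly_continuous F -> jointly_continuous G -> jointly_continuous (fun x p => F x p + G x p).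
Proof. intros HF HG x p. apply continuous_plus_R; auto. Qed.

Lemma jointly_continuous_mult {P : UniformSpace} (F G : R -> P -> R) :
  jointly_continuous F -> jointly_continuous G -> jointly_continuous (fun x p => F x p * G x p).
Proof. intros HF HG x p. apply continuous_mult_R; auto. Qed.

Lemma jointly_continuous_abs {P : UniformSpace} (F : R -> P -> R) :
  jointly_continuous F -> jointly_continuous (fun x p => Rabs (F x p)).
Proof. intros HF x p. apply continuous_abs_R; auto. Qed.

Lemma jointly_continuous_comp {P Q : UniformSpace} (F : R -> P -> R) (a : R -> R) (b : Q -> P) :
  jointly_continuous F -> (forall x, continuous a x) -> (forall q, continuous b q) ->
  jointly_continuous (fun x q => F (a x) (b q)).
Proof.
  intros HF Ha Hb x q.
  apply (continuous_comp (fun z : R * Q => (a (fst z), b (snd z))) (fun z : R * P => F (fst z) (snd z))).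
  - apply continuous_pair.
    + apply (continuous_comp fst a); [apply continuous_fst | apply Ha].
    + apply (continuous_comp snd b); [apply continuous_snd | apply Hb].
  - apply HF.
Qed.

(* Compactness of [a, b] turns continuity at every (x, p0) into uniformity in x. *)
Lemma jointly_continuous_uniform {P : UniformSpace} (F : R -> P -> R) (a b : R) (p0 : P) :
  (forall x, a <= x <= b -> continuous (fun z : R * P => F (fst z) (snd z)) (x, p0)) ->
  forall eps : posreal,
    locally p0 (fun p => forall x, a <= x <= b -> Rabs (F x p - F x p0) < eps).
Proof.
  intros Hc eps.
  assert (He2 : 0 < eps / 2) by (destruct eps; simpl; lra).
  assert (Hex : forall x, exists e : posreal, a <= x <= b ->
     forall z : R * P, ball (x, p0) e z -> Rabs (F (fst z) (snd z) - F x p0) < eps / 2).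
  { intros x. destruct (classic (a <= x <= b)) as [Hx | Hx].
    - specialize (Hc x Hx). apply filterlim_locally with (eps := mkposreal _ He2) in Hc.
      destruct Hc as [e He]. exists e. intros _ z Hz. apply He, Hz.
    - exists (mkposreal 1 Rlt_0_1). tauto. }
  set (dl := fun x => proj1_sig (constructive_indefinite_description _ (Hex x))).
  assert (Hdl : forall x, a <= x <= b -> forall z : R * P, ball (x, p0) (dl x) z ->
      Rabs (F (fst z) (snd z) - F x p0) < eps / 2).
  { intros x. unfold dl. destruct (constructive_indefinite_description _ (Hex x)) as [e He]. exact He. }
  assert (Hpos : forall x, 0 < dl x / 2) by (intros x; destruct (dl x); simpl; lra).
  destruct (compactness_value_1d a b (fun x => mkposreal _ (Hpos x))) as [d Hd].
  exists d. intros p Hp x Hx.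
  specialize (Hd x Hx). simpl in Hd.
  apply NNPP. intros Hn. apply Hd. intros [u [Hu [Hxu Hdu]]]. apply Hn.
  assert (H1 : Rabs (F x p - F u p0) < eps / 2).
  { apply (Hdl u Hu (x, p)). split; simpl.
    - change (Rabs (x - u) < dl u). pose proof (Hpos u). lra.
    - apply ball_le with d; [pose proof (Hpos u); lra | exact Hp]. }
  assert (H2 : Rabs (F x p0 - F u p0) < eps / 2).
  { apply (Hdl u Hu (x, p0)). split; simpl.
    - change (Rabs (x - u) < dl u). pose proof (Hpos u). lra.
    - apply ball_center. }
  replace (F x p - F x p0) with ((F x p - F u p0) - (F x p0 - F u p0)) by ring.
  eapply Rle_lt_trans; [apply Rabs_triang|]. rewrite Rabs_Ropp.
  destruct eps; simpl in *; lra.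
Qed.

Lemma continuous_RInt_param {P : UniformSpace} (F : R -> P -> R) a b p0 :
  a <= b -> jointly_continuous F -> continuous (fun p => RInt (fun x => F x p) a b) p0.
Proof.
  intros Hab HF. apply filterlim_locally. intros eps.
  assert (Hp : 0 < eps / (b - a + 1)) by (apply Rdiv_lt_0_compat; [apply cond_pos | lra]).
  destruct (jointly_continuous_uniform F a b p0 (fun x _ => HF x p0) (mkposreal _ Hp)) as [d Hd].
  exists d. intros p Hpd. change (Rabs (RInt (fun x => F x p) a b - RInt (fun x => F x p0) a b) < eps).
  rewrite <- RInt_minus_R by (apply jointly_continuous_ex_RInt, HF).
  eapply Rle_lt_trans.
  { apply abs_RInt_le_const with (M := eps / (b - a + 1)); [exact Hab | |].
    - apply ex_RInt_minus_R; apply jointly_continuous_ex_RInt, HF.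
    - intros t Ht. left. apply (Hd p Hpd t Ht). }
  apply Rlt_le_trans with ((b - a + 1) * (eps / (b - a + 1))).
  - apply Rmult_lt_compat_r; [exact Hp | lra].
  - right. field. lra.
Qed.

Lemma continuous_RInt_param_R (k : R -> R -> R) a b x0 :
  jointly_continuous (P := R_UniformSpace) (fun y x => k x y) ->
  continuous (fun x => RInt (fun y => k x y) a b) x0.
Proof.
  intros H. destruct (Rle_dec a b) as [Hab | Hab].
  - exact (continuous_RInt_param (fun y x => k x y) a b x0 Hab H).
  - apply (continuous_ext (fun x => - RInt (fun y => k x y) b a)).
    + intros x. rewrite (RInt_swap_R _ b a) by (apply (jointly_continuous_ex_RInt (fun y x => k x y)), H).
      reflexivity.
    + apply (continuous_opp (fun x => RInt (fun y => k x y) b a)).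
      apply (continuous_RInt_param (fun y x => k x y) b a x0); [lra | exact H].
Qed.

(** * Integrals over (0, +oo) *)

Definition is_Iinf (f : R -> R) (l : R) : Prop := is_RInt_gen f (at_point 0) pinf l.

Lemma is_Iinf_RInt_lim (f : R -> R) l :
  (forall b, 0 <= b -> ex_RInt f 0 b) ->
  filterlim (fun b => RInt f 0 b) pinf (locally l) -> is_Iinf f l.
Proof.
  intros Hex Hl P HP.
  destruct (Hl P HP) as [M HM].
  apply Filter_prod with (Q := fun a => a = 0) (R := fun b => Rmax M 0 < b).
  - reflexivity.
  - exists (Rmax M 0). auto.
  - intros x y -> Hy. exists (RInt f 0 y). split.
    + apply RInt_correct_R, Hex. pose proof (Rmax_r M 0). lra.
    + apply HM. pose proof (Rmax_l M 0). lra.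
Qed.

Lemma is_Iinf_lim_RInt (f : R -> R) l :
  is_Iinf f l -> filterlim (fun b => RInt f 0 b) pinf (locally l).
Proof.
  intros H P HP. destruct (H P HP) as [Q Rr HQ HR Hqr]. unfold filtermap.
  apply (filter_imp Rr); [|exact HR].
  intros b Hb. destruct (Hqr 0 b HQ Hb) as [y [Hy Py]]. simpl in Hy.
  rewrite (is_RInt_unique_R _ _ _ _ Hy). exact Py.
Qed.

Lemma is_Iinf_unique (f : R -> R) l : is_Iinf f l -> Iinf f = l.
Proof. exact (is_RInt_gen_unique (V := R_CompleteNormedModule) f l). Qed.

Lemma is_Iinf_ext (f g : R -> R) l : (forall s, 0 < s -> f s = g s) -> is_Iinf f l -> is_Iinf g l.
Proof.
  intros Hfg H. apply (is_RInt_gen_ext f g); [| exact H].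
  apply Filter_prod with (Q := fun a => a = 0) (R := fun b => 0 < b).
  - reflexivity.
  - exists 0. auto.
  - intros x y -> Hy z Hz. simpl in Hz. apply Hfg. rewrite Rmin_left in Hz by lra. lra.
Qed.

Lemma is_Iinf_plus (f g : R -> R) lf lg :
  is_Iinf f lf -> is_Iinf g lg -> is_Iinf (fun s => f s + g s) (lf + lg).
Proof. exact (is_RInt_gen_plus f g lf lg). Qed.

Lemma is_Iinf_scal (f : R -> R) k lf : is_Iinf f lf -> is_Iinf (fun s => k * f s) (k * lf).
Proof. exact (is_RInt_gen_scal f k lf). Qed.

Lemma is_Iinf_minus (f g : R -> R) lf lg :
  is_Iinf f lf -> is_Iinf g lg -> is_Iinf (fun s => f s - g s) (lf - lg).
Proof. exact (is_RInt_gen_minus f g lf lg). Qed.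

Lemma is_Iinf_0 : is_Iinf (fun _ => 0) 0.
Proof.
  apply is_Iinf_RInt_lim.
  - intros b _. apply ex_RInt_continuous_R. intros; apply continuous_const.
  - apply (filterlim_ext (fun _ => 0)); [|apply filterlim_const].
    intros b. rewrite RInt_const_R. ring.
Qed.

Lemma is_Iinf_abs_le (f g : R -> R) lf lg : (forall s, 0 <= s -> Rabs (f s) <= g s) ->
  is_Iinf f lf -> is_Iinf g lg -> Rabs lf <= lg.
Proof.
  intros Hb Hf Hg.
  apply (RInt_gen_norm (V := R_CompleteNormedModule) (Fa := at_point 0) (Fb := pinf) f g lf lg);
    try assumption.
  - apply Filter_prod with (Q := fun a => a = 0) (R := fun b => 0 < b).
    + reflexivity.
    + exists 0. auto.
    + intros x y -> Hy. simpl. lra.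
  - apply Filter_prod with (Q := fun a => a = 0) (R := fun b => 0 < b).
    + reflexivity.
    + exists 0. auto.
    + intros x y -> Hy z Hz. simpl in Hz. apply Hb. lra.
Qed.

Lemma is_Iinf_le (f g : R -> R) lf lg : (forall s, 0 <= s -> f s <= g s) ->
  is_Iinf f lf -> is_Iinf g lg -> lf <= lg.
Proof.
  intros Hb Hf Hg.
  assert (H : Rabs (lg - lf) <= lg - lf).
  { apply (is_Iinf_abs_le (fun s => g s - f s) (fun s => g s - f s));
      try (apply is_Iinf_minus; assumption).
    intros s Hs. specialize (Hb s Hs). rewrite Rabs_right; lra. }
  pose proof (Rle_abs (lf - lg)). rewrite Rabs_minus_sym in H. lra.
Qed.

Lemma RInt_le_is_Iinf (g : R -> R) lg Z : 0 <= Z -> is_Iinf g lg ->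
  (forall b, 0 <= b -> ex_RInt g 0 b) -> (forall s, 0 <= s -> 0 <= g s) -> RInt g 0 Z <= lg.
Proof.
  intros HZ HG Hex Hp.
  apply (filterlim_le_R (fun _ => RInt g 0 Z) (fun b => RInt g 0 b));
    [apply filterlim_const | apply is_Iinf_lim_RInt, HG |].
  generalize (p_infty_ge Z). apply filter_imp. intros b Hb.
  assert (HZb : ex_RInt g Z b) by (apply ex_RInt_Chasles_2_R with 0; [lra | apply Hex; lra]).
  rewrite <- (RInt_Chasles_R g 0 Z b) by auto.
  assert (0 <= RInt g Z b) by (apply RInt_ge_0; auto; intros x Hx; apply Hp; lra).
  lra.
Qed.

Lemma is_Iinf_tail_le (f g : R -> R) lf lg Y : 0 <= Y ->
  (forall b, 0 <= b -> ex_RInt f 0 b) -> (forall b, 0 <= b -> ex_RInt g 0 b) ->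
  (forall s, 0 <= s -> Rabs (f s) <= g s) -> is_Iinf f lf -> is_Iinf g lg ->
  Rabs (lf - RInt f 0 Y) <= lg - RInt g 0 Y.
Proof.
  intros HY Hf Hg Hb HF HG.
  assert (Hg0 : forall s, 0 <= s -> 0 <= g s)
    by (intros s Hs; pose proof (Hb s Hs); pose proof (Rabs_pos (f s)); lra).
  apply (filterlim_abs_le_R (fun Z => RInt f 0 Z - RInt f 0 Y)).
  { apply filterlim_minus_R; [apply is_Iinf_lim_RInt, HF | apply filterlim_const]. }
  generalize (p_infty_ge Y). apply filter_imp. intros Z HZ.
  assert (HfYZ : ex_RInt f Y Z) by (apply ex_RInt_Chasles_2_R with 0; [lra | apply Hf; lra]).
  assert (HgYZ : ex_RInt g Y Z) by (apply ex_RInt_Chasles_2_R with 0; [lra | apply Hg; lra]).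
  rewrite <- (RInt_Chasles_R f 0 Y Z) by auto.
  rewrite Rplus_minus_l.
  eapply Rle_trans.
  { apply (abs_RInt_le_RInt _ g); auto. intros x Hx. apply Hb. lra. }
  pose proof (RInt_le_is_Iinf g lg Z ltac:(lra) HG Hg Hg0) as HZ'.
  rewrite <- (RInt_Chasles_R g 0 Y Z) in HZ' by auto. lra.
Qed.

Lemma is_Iinf_tail_lim (g : R -> R) lg :
  is_Iinf g lg -> filterlim (fun Y => lg - RInt g 0 Y) pinf (locally 0).
Proof.
  intros HG.
  pose proof (filterlim_minus_R _ _ lg lg (filterlim_const lg) (is_Iinf_lim_RInt g lg HG)) as H.
  replace (lg - lg) with 0 in H by ring. exact H.
Qed.

(* The partial integrals of f are Cauchy because those of g converge. *)
Lemma is_Iinf_dominated (f g : R -> R) lg :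
  (forall b, 0 <= b -> ex_RInt f 0 b) -> (forall b, 0 <= b -> ex_RInt g 0 b) ->
  (forall s, 0 <= s -> Rabs (f s) <= g s) -> is_Iinf g lg -> is_Iinf f (Iinf f).
Proof.
  intros Hf Hg Hb HG.
  set (Fm := filtermap (fun b => RInt f 0 b) pinf).
  assert (PF : ProperFilter Fm) by (apply filtermap_proper_filter; apply Rbar_locally_filter).
  assert (Hg0 : forall s, 0 <= s -> 0 <= g s)
    by (intros s Hs; pose proof (Hb s Hs); pose proof (Rabs_pos (f s)); lra).
  assert (Hc : cauchy Fm).
  { intros eps. pose proof (is_Iinf_tail_lim g lg HG) as Hl.
    apply filterlim_locally with (eps := eps) in Hl. destruct Hl as [M HM].
    set (N := Rmax M 0 + 1).
    assert (HN0 : 0 <= N) by (unfold N; pose proof (Rmax_r M 0); lra).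
    assert (HNM : M < N) by (unfold N; pose proof (Rmax_l M 0); lra).
    exists (RInt f 0 N), N. intros b Hbn. change (Rabs (RInt f 0 b - RInt f 0 N) < eps).
    specialize (HM N HNM). change (Rabs (lg - RInt g 0 N - 0) < eps) in HM.
    rewrite Rminus_0_r in HM. apply Rabs_def2 in HM.
    assert (HfNb : ex_RInt f N b) by (apply ex_RInt_Chasles_2_R with 0; [lra | apply Hf; lra]).
    assert (HgNb : ex_RInt g N b) by (apply ex_RInt_Chasles_2_R with 0; [lra | apply Hg; lra]).
    assert (Hgb : RInt g 0 b <= lg) by (apply RInt_le_is_Iinf; auto; lra).
    rewrite <- (RInt_Chasles_R g 0 N b) in Hgb by auto.
    rewrite <- (RInt_Chasles_R f 0 N b), Rplus_minus_l by auto.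
    apply Rle_lt_trans with (RInt g N b); [|lra].
    apply abs_RInt_le_RInt; auto; [lra|]. intros x Hx. apply Hb. lra. }
  assert (HI : is_Iinf f (lim Fm)).
  { apply is_Iinf_RInt_lim; auto. apply filterlim_locally. intros eps.
    apply (complete_cauchy Fm PF Hc eps). }
  rewrite (is_Iinf_unique f _ HI). exact HI.
Qed.

Lemma ex_Iinf_nonneg_bounded (f : R -> R) C :
  (forall b, 0 <= b -> ex_RInt f 0 b) -> (forall s, 0 <= s -> 0 <= f s) ->
  (forall b, 0 <= b -> RInt f 0 b <= C) -> exists l, is_Iinf f l.
Proof.
  intros Hf Hp HC.
  set (E := fun y => exists b, 0 <= b /\ y = RInt f 0 b).
  assert (HE1 : bound E) by (exists C; intros y [b [Hb ->]]; apply HC; auto).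
  assert (HE2 : exists y, E y) by (exists (RInt f 0 0), 0; split; [lra | auto]).
  destruct (completeness E HE1 HE2) as [l [Hub Hlub]].
  exists l. apply is_Iinf_RInt_lim; auto.
  apply filterlim_locally. intros eps.
  assert (Hx : exists b0, 0 <= b0 /\ l - eps < RInt f 0 b0).
  { apply NNPP. intros Hn.
    assert (l <= l - eps).
    { apply Hlub. intros y [b [Hb ->]]. apply Rnot_lt_le. intros Hlt. apply Hn. exists b. auto. }
    destruct eps; simpl in *; lra. }
  destruct Hx as [b0 [Hb0 Hlt]].
  exists b0. intros b Hb. change (Rabs (RInt f 0 b - l) < eps).
  assert (Hle : RInt f 0 b <= l) by (apply Hub; exists b; split; [lra | auto]).
  assert (Hb0b : ex_RInt f b0 b) by (apply ex_RInt_Chasles_2_R with 0; [lra | apply Hf; lra]).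
  assert (0 <= RInt f b0 b) by (apply RInt_ge_0; auto; [lra | intros x Hx; apply Hp; lra]).
  rewrite <- (RInt_Chasles_R f 0 b0 b) in Hle |- * by auto.
  rewrite Rabs_left1 by lra. lra.
Qed.

(** * Uniform limits and interchange of limits *)

Section UniformLimit.

Variables (FY : R -> R -> R) (F : R -> R) (T : R -> R).
Hypothesis HT : filterlim T pinf (locally 0).
Hypothesis Hunif : forall Y x, 0 <= Y -> Rabs (F x - FY Y x) <= T Y.

Lemma uniform_lim_eventually (eps : posreal) : pinf (fun Y => 0 <= Y /\ Rabs (T Y) < eps).
Proof.
  apply filter_and; [apply p_infty_ge|].
  apply filterlim_locally with (eps := eps) in HT. revert HT. apply filter_imp.
  intros Y HY. change (Rabs (T Y - 0) < eps) in HY. rewrite Rminus_0_r in HY. exact HY.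
Qed.

Lemma continuous_uniform_lim x0 : (forall Y, 0 <= Y -> continuous (FY Y) x0) -> continuous F x0.
Proof.
  intros HFY. apply filterlim_locally. intros eps.
  assert (He3 : 0 < eps / 3) by (destruct eps; simpl; lra).
  destruct (filter_ex _ (uniform_lim_eventually (mkposreal _ He3))) as [Y [HY HTY]]. simpl in HTY.
  pose proof (HFY Y HY) as Hc. apply filterlim_locally with (eps := mkposreal _ He3) in Hc.
  generalize Hc. apply filter_imp. intros x Hx. change (Rabs (FY Y x - FY Y x0) < eps / 3) in Hx.
  change (Rabs (F x - F x0) < eps).
  pose proof (Hunif Y x HY) as H1. pose proof (Hunif Y x0 HY) as H2.
  apply Rabs_def2 in Hx. apply Rabs_def2 in HTY.
  apply Rabs_le_between' in H1. apply Rabs_le_between' in H2.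
  apply Rabs_def1; lra.
Qed.

Lemma RInt_uniform_lim a b : a <= b ->
  (forall Y, 0 <= Y -> ex_RInt (FY Y) a b) -> ex_RInt F a b ->
  filterlim (fun Y => RInt (FY Y) a b) pinf (locally (RInt F a b)).
Proof.
  intros Hab HFY HF. apply filterlim_locally. intros eps.
  assert (He : 0 < eps / (b - a + 1)) by (apply Rdiv_lt_0_compat; [apply cond_pos | lra]).
  generalize (uniform_lim_eventually (mkposreal _ He)). apply filter_imp.
  intros Y [HY HTY]. simpl in HTY. apply Rabs_def2 in HTY.
  change (Rabs (RInt (FY Y) a b - RInt F a b) < eps).
  rewrite <- RInt_minus_R by auto.
  eapply Rle_lt_trans.
  { apply abs_RInt_le_const with (M := T Y); [exact Hab | apply ex_RInt_minus_R; auto |].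
    intros t _. rewrite Rabs_minus_sym. apply Hunif, HY. }
  apply Rle_lt_trans with ((b - a) * (eps / (b - a + 1))).
  - apply Rmult_le_compat_l; lra.
  - apply Rlt_le_trans with ((b - a + 1) * (eps / (b - a + 1))).
    + apply Rmult_lt_compat_r; lra.
    + right. field. lra.
Qed.

End UniformLimit.

Lemma jointly_continuous_swap (k : R -> R -> R) :
  jointly_continuous (P := R_UniformSpace) k ->
  jointly_continuous (P := R_UniformSpace) (fun u v => k v u).
Proof.
  intros H u v.
  apply (continuous_comp (fun z : R * R => (snd z, fst z)) (fun z : R * R => k (fst z) (snd z))).
  - apply continuous_pair; [apply continuous_snd | apply continuous_fst].
  - apply H.
Qed.

Lemma jointly_continuous_2d (k : R -> R -> R) x y :
  jointly_continuous (P := R_UniformSpace) k -> continuity_2d_pt k x y.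
Proof. intros H. apply continuity_2d_pt_filterlim, H. Qed.

Lemma is_derive_RInt_continuous (f : R -> R) a y :
  (forall x, continuous f x) -> is_derive (fun z => RInt f a z) y (f y).
Proof.
  intros Hf. apply (is_derive_RInt (V := R_NormedModule) f _ a y); [|apply Hf].
  exists (mkposreal 1 Rlt_0_1). intros z _. apply RInt_correct_R.
  apply ex_RInt_continuous_R. auto.
Qed.

(* Both sides are antiderivatives in [d] of [s |-> RInt (k . s) a b] vanishing at [c]. *)
Lemma RInt_RInt_swap (k : R -> R -> R) a b c d :
  jointly_continuous (P := R_UniformSpace) k ->
  RInt (fun x => RInt (fun s => k x s) c d) a b = RInt (fun s => RInt (fun x => k x s) a b) c d.
Proof.
  intros Hk.
  set (P := fun y => RInt (fun x => RInt (fun s => k x s) c y) a b).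
  set (G := fun s => RInt (fun x => k x s) a b).
  assert (HG : forall s, continuous G s) by (intros s; apply (continuous_RInt_param_R (fun s x => k x s)), Hk).
  assert (Hks : forall x y, continuous (fun s => k x s) y)
    by (intros; apply jointly_continuous_r, Hk).
  assert (HP : forall y, is_derive P y (G y)).
  { intros y. unfold G.
    rewrite (RInt_ext (fun x => k x y) (fun x => Derive (fun u => RInt (fun s => k x s) c u) y))
      by (intros x _; symmetry; apply is_derive_unique, is_derive_RInt_continuous; auto).
    apply (is_derive_RInt_param (fun z x => RInt (fun s => k x s) c z) a b y).
    - apply filter_forall. intros z t _. eexists. apply is_derive_RInt_continuous. auto.
    - intros t _.
      apply continuity_2d_pt_ext with (fun u v => k v u).
      + intros u v. symmetry. apply is_derive_unique, is_derive_RInt_continuous. auto.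
      + apply jointly_continuous_2d, jointly_continuous_swap, Hk.
    - apply filter_forall. intros z. apply ex_RInt_continuous_R. intros w _.
      apply (continuous_RInt_param_R (fun x s => k x s)), jointly_continuous_swap, Hk. }
  change (P d = RInt G c d).
  rewrite (RInt_derive_R P G c d) by auto.
  assert (HPc : P c = 0).
  { unfold P. rewrite (RInt_ext _ (fun _ => 0)) by (intros; exact (RInt_point (V := R_CompleteNormedModule) c _)).
    rewrite RInt_const_R. apply Rmult_0_r. }
  rewrite HPc. symmetry. apply Rminus_0_r.
Qed.

Lemma is_Iinf_RInt_swap (k : R -> R -> R) (g : R -> R) lg a b :
  a <= b -> jointly_continuous (P := R_UniformSpace) k ->
  (forall b', 0 <= b' -> ex_RInt g 0 b') -> is_Iinf g lg ->
  (forall x s, 0 <= s -> Rabs (k x s) <= g s) ->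
  ex_RInt (fun x => Iinf (k x)) a b /\
  is_Iinf (fun s => RInt (fun x => k x s) a b) (RInt (fun x => Iinf (k x)) a b).
Proof.
  intros Hab Hk Hg HG Hb.
  assert (Hkx : forall x b', ex_RInt (k x) 0 b')
    by (intros; apply ex_RInt_continuous_R; intros; apply jointly_continuous_r, Hk).
  assert (HK : forall x, is_Iinf (k x) (Iinf (k x))) by (intros x; apply (is_Iinf_dominated _ g lg); auto).
  set (FY := fun Y x => RInt (k x) 0 Y).
  assert (HT := is_Iinf_tail_lim g lg HG).
  assert (Htail : forall Y x, 0 <= Y -> Rabs (Iinf (k x) - FY Y x) <= lg - RInt g 0 Y)
    by (intros Y x HY; apply (is_Iinf_tail_le (k x) g); auto).
  assert (HFY : forall Y x, continuous (FY Y) x)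
    by (intros; apply (continuous_RInt_param_R k), jointly_continuous_swap, Hk).
  assert (HexK : ex_RInt (fun x => Iinf (k x)) a b).
  { apply ex_RInt_continuous_R. intros x _.
    apply (continuous_uniform_lim FY _ _ HT Htail). auto. }
  split; [exact HexK|].
  apply is_Iinf_RInt_lim.
  - intros b' _. apply ex_RInt_continuous_R. intros z _.
    apply (continuous_RInt_param_R (fun s x => k x s)), Hk.
  - apply (filterlim_ext (fun Y => RInt (FY Y) a b)).
    + intros Y. apply RInt_RInt_swap, Hk.
    + apply (RInt_uniform_lim FY _ _ HT Htail); auto.
      intros Y _. apply ex_RInt_continuous_R. auto.
Qed.

Section UniformDerivative.

Variables (HY DY : R -> R -> R) (H : R -> R) (T : R -> R) (t0 r : R).
Hypothesis Hr : 0 < r.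
Hypothesis HT : filterlim T pinf (locally 0).
Hypothesis Hder : forall Y tau, 0 <= Y -> t0 - r < tau < t0 + r -> is_derive (HY Y) tau (DY Y tau).
Hypothesis Hlim : forall tau, t0 - r < tau < t0 + r ->
  filterlim (fun Y => HY Y tau) pinf (locally (H tau)).
Hypothesis Hcauchy : forall Y Z tau, 0 <= Y <= Z -> t0 - r < tau < t0 + r ->
  Rabs (DY Z tau - DY Y tau) <= T Y.

Lemma increment_uniform_lim_le Y tau : 0 <= Y -> t0 - r < tau < t0 + r ->
  Rabs ((H tau - H t0) - (HY Y tau - HY Y t0)) <= Rabs (tau - t0) * T Y.
Proof.
  intros HY0 Ht.
  assert (Hseg : forall x, Rmin t0 tau <= x <= Rmax t0 tau -> t0 - r < x < t0 + r)
    by (intros x Hx; unfold Rmin, Rmax in Hx; destruct Rle_dec; lra).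
  replace ((H tau - H t0) - (HY Y tau - HY Y t0)) with ((H tau - HY Y tau) - (H t0 - HY Y t0)) by ring.
  apply (filterlim_abs_le_R (fun Z => (HY Z tau - HY Y tau) - (HY Z t0 - HY Y t0))).
  { apply filterlim_minus_R; apply filterlim_minus_R; try apply filterlim_const; apply Hlim; lra. }
  generalize (p_infty_ge Y). apply filter_imp. intros Z HZ.
  destruct (MVT_gen (fun sg => HY Z sg - HY Y sg) t0 tau (fun sg => DY Z sg - DY Y sg)) as [c [Hc Hmvt]].
  - intros x Hx. apply (is_derive_minus (HY Z) (HY Y)); apply Hder; try lra; apply Hseg; lra.
  - intros x Hx. apply (continuity_pt_filterlim (fun sg => HY Z sg - HY Y sg)).
    apply (ex_derive_continuous_R (fun sg => HY Z sg - HY Y sg)).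
    eexists. apply (is_derive_minus (HY Z) (HY Y)); apply Hder; try lra; apply Hseg; lra.
  - rewrite Hmvt, Rabs_mult, Rmult_comm.
    apply Rmult_le_compat_l; [apply Rabs_pos | apply Hcauchy; [lra | apply Hseg; lra]].
Qed.

Lemma is_derive_uniform_lim D0 :
  filterlim (fun Y => DY Y t0) pinf (locally D0) -> is_derive H t0 D0.
Proof.
  intros HD.
  assert (Ht0 : t0 - r < t0 < t0 + r) by lra.
  assert (HDY : forall Y, 0 <= Y -> Rabs (D0 - DY Y t0) <= T Y).
  { intros Y HY0. apply (filterlim_abs_le_R (fun Z => DY Z t0 - DY Y t0)).
    - apply filterlim_minus_R; [exact HD | apply filterlim_const].
    - generalize (p_infty_ge Y). apply filter_imp. intros Z HZ. apply Hcauchy; auto; lra. }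
  apply is_derive_Reals. intros eps Heps.
  assert (He3 : 0 < eps / 3) by lra.
  apply filterlim_locally with (eps := mkposreal _ He3) in HT. destruct HT as [M HM].
  set (Y := Rmax M 0 + 1).
  assert (HY0 : 0 <= Y) by (unfold Y; pose proof (Rmax_r M 0); lra).
  assert (HTY : Rabs (T Y - 0) < eps / 3) by (apply HM; unfold Y; pose proof (Rmax_l M 0); lra).
  rewrite Rminus_0_r in HTY.
  pose proof (Hder Y t0 HY0 Ht0) as Hd. apply is_derive_Reals in Hd.
  destruct (Hd (eps / 3) He3) as [d1 Hd1].
  assert (Hd2 : 0 < Rmin d1 r) by (apply Rmin_pos; [apply cond_pos | lra]).
  exists (mkposreal _ Hd2). intros k Hk0 Hk. simpl in Hk.
  pose proof (Rmin_l d1 r). pose proof (Rmin_r d1 r).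
  assert (HJ : t0 - r < t0 + k < t0 + r) by (apply Rabs_def2 in Hk; lra).
  specialize (Hd1 k Hk0 ltac:(lra)).
  pose proof (increment_uniform_lim_le Y (t0 + k) HY0 HJ) as Hkey.
  replace (t0 + k - t0) with k in Hkey by ring.
  assert (Hk' : 0 < Rabs k) by (apply Rabs_pos_lt; exact Hk0).
  assert (Hq : Rabs (((H (t0 + k) - H t0) - (HY Y (t0 + k) - HY Y t0)) / k) <= T Y).
  { unfold Rdiv. rewrite Rabs_mult, Rabs_inv.
    apply Rmult_le_reg_r with (Rabs k); [exact Hk'|]. rewrite Rmult_assoc, Rinv_l by lra. lra. }
  specialize (HDY Y HY0).
  revert Hq Hd1 HDY HTY.
  generalize (H (t0 + k)) (H t0) (HY Y (t0 + k)) (HY Y t0) (DY Y t0) (T Y).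
  intros a b c d e tY Hq Hd1 HDY HTY.
  replace ((a - b) / k - D0) with (((a - b) - (c - d)) / k + ((c - d) / k - e) - (D0 - e)) by (field; lra).
  eapply Rle_lt_trans; [apply Rabs_triang|]. rewrite Rabs_Ropp.
  eapply Rle_lt_trans; [apply Rplus_le_compat_r, Rabs_triang|].
  apply Rabs_def2 in HTY. lra.
Qed.

End UniformDerivative.

Lemma continuity_2d_pt_continuous_r (f : R -> R -> R) x y :
  continuity_2d_pt f x y -> continuous (fun v => f x v) y.
Proof.
  intros H. apply continuity_2d_pt_filterlim in H.
  apply (continuous_comp (fun v => (x, v)) (fun z : R * R => f (fst z) (snd z))); auto.
  apply continuous_pair; [apply continuous_const | apply continuous_id].
Qed.

Lemma is_derive_Iinf_param (h hd : R -> R -> R) (g : R -> R) lg t0 r :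
  0 < r ->
  (forall s tau, t0 - r < tau < t0 + r -> is_derive (fun z => h s z) tau (hd s tau)) ->
  (forall s tau, 0 <= s -> t0 - r < tau < t0 + r -> continuity_2d_pt (fun u v => hd v u) tau s) ->
  (forall tau, t0 - r < tau < t0 + r -> forall b, 0 <= b -> ex_RInt (fun s => h s tau) 0 b) ->
  (forall s tau, 0 <= s -> t0 - r < tau < t0 + r -> Rabs (h s tau) <= g s /\ Rabs (hd s tau) <= g s) ->
  (forall b, 0 <= b -> ex_RInt g 0 b) -> is_Iinf g lg ->
  is_derive (fun tau => Iinf (fun s => h s tau)) t0 (Iinf (fun s => hd s t0)).
Proof.
  intros Hr Hder Hcont Hexh Hbd Hexg HG.
  assert (Ht0 : t0 - r < t0 < t0 + r) by lra.
  assert (Hexhd : forall tau, t0 - r < tau < t0 + r -> forall b, 0 <= b -> ex_RInt (fun s => hd s tau) 0 b).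
  { intros tau Ht b Hb. apply ex_RInt_continuous_le; auto. intros z Hz.
    apply (continuity_2d_pt_continuous_r (fun u v => hd v u)), Hcont; [lra | exact Ht]. }
  assert (Hdom : forall f, (forall s, 0 <= s -> Rabs (f s) <= g s) ->
             (forall b, 0 <= b -> ex_RInt f 0 b) -> filterlim (fun Y => RInt f 0 Y) pinf (locally (Iinf f)))
    by (intros f Hf Hex; apply is_Iinf_lim_RInt, (is_Iinf_dominated f g lg); auto).
  apply (is_derive_uniform_lim (fun Y tau => RInt (fun s => h s tau) 0 Y) (fun Y tau => RInt (fun s => hd s tau) 0 Y)
           _ (fun Y => lg - RInt g 0 Y) t0 r Hr (is_Iinf_tail_lim g lg HG)).
  - intros Y tau HY0 Ht.
    assert (Hloc : locally tau (fun u => t0 - r < u < t0 + r))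
      by (apply (locally_interval _ tau (t0 - r) (t0 + r)); simpl; intros; lra).
    rewrite (RInt_ext (fun s => hd s tau) (fun s => Derive (fun u => h s u) tau))
      by (intros x _; symmetry; apply is_derive_unique, Hder, Ht).
    apply (is_derive_RInt_param (fun z s => h s z) 0 Y tau).
    + revert Hloc. apply filter_imp. intros z Hz t _. exists (hd t z). apply Hder, Hz.
    + intros t Htt. rewrite Rmin_left, Rmax_right in Htt by lra.
      apply continuity_2d_pt_ext_loc with (fun u v => hd v u); [|apply Hcont; auto; lra].
      destruct Hloc as [e He]. exists e. intros u v Hu _.
      symmetry. apply is_derive_unique, Hder, He, Hu.
    + revert Hloc. apply filter_imp. intros z Hz. apply Hexh; auto.
  - intros tau Ht. apply Hdom; [intros s Hs; apply (Hbd s tau Hs Ht) | apply Hexh, Ht].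
  - intros Y Z tau HYZ Ht.
    assert (HYZg : ex_RInt g Y Z) by (apply ex_RInt_Chasles_2_R with 0; [lra | apply Hexg; lra]).
    assert (HYZh : ex_RInt (fun s => hd s tau) Y Z)
      by (apply ex_RInt_Chasles_2_R with 0; [lra | apply Hexhd; auto; lra]).
    rewrite <- (RInt_Chasles_R (fun s => hd s tau) 0 Y Z), Rplus_minus_l by (auto; apply Hexhd; auto; lra).
    eapply Rle_trans; [apply (abs_RInt_le_RInt _ g); auto; try lra; intros x Hx; apply (Hbd x tau); auto; lra|].
    pose proof (RInt_le_is_Iinf g lg Z ltac:(lra) HG Hexg) as HZ.
    rewrite <- (RInt_Chasles_R g 0 Y Z) in HZ by (auto; apply Hexg; lra).
    apply Rplus_le_reg_l with (RInt g 0 Y). apply Rle_trans with lg; [|lra].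
    apply HZ. intros s Hs. pose proof (Hbd s t0 Hs Ht0) as [H1 _]. pose proof (Rabs_pos (h s t0)). lra.
  - apply Hdom; [intros s Hs; apply (Hbd s t0 Hs Ht0) | apply Hexhd, Ht0].
Qed.

(** * Elementary integral inequalities *)

Lemma Rabs_mult_le_Young (a u v : R) : 0 < a -> Rabs (u * v) <= (a * (u * u) + v * v / a) / 2.
Proof.
  intros Ha.
  assert (H1 : 0 <= (a * u - v) * (a * u - v) / a)
    by (apply Rdiv_le_0_compat; [apply Rle_0_sqr | exact Ha]).
  assert (H2 : 0 <= (a * u + v) * (a * u + v) / a)
    by (apply Rdiv_le_0_compat; [apply Rle_0_sqr | exact Ha]).
  assert (E1 : (a * u - v) * (a * u - v) / a = a * (u * u) + v * v / a - 2 * (u * v)) by (field; lra).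
  assert (E2 : (a * u + v) * (a * u + v) / a = a * (u * u) + v * v / a + 2 * (u * v)) by (field; lra).
  apply Rabs_le. lra.
Qed.

Lemma continuous_sqr_R (f : R -> R) x : continuous f x -> continuous (fun y => f y * f y) x.
Proof. intros Hf. apply continuous_mult_R; exact Hf. Qed.

Lemma RInt_mult_le_Young (f g : R -> R) a A B : 0 < a -> A <= B ->
  (forall x, continuous f x) -> (forall x, continuous g x) ->
  Rabs (RInt (fun x => f x * g x) A B) <=
    (a * RInt (fun x => f x * f x) A B + RInt (fun x => g x * g x) A B / a) / 2.
Proof.
  intros Ha HAB Hf Hg.
  assert (Ex : forall h : R -> R, (forall x, continuous h x) -> ex_RInt h A B)
    by (intros h Hh; apply ex_RInt_continuous_R; auto).
  assert (Hff : ex_RInt (fun x => f x * f x) A B) by (apply Ex; intros; apply continuous_sqr_R; auto).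
  assert (Hgg : ex_RInt (fun x => g x * g x) A B) by (apply Ex; intros; apply continuous_sqr_R; auto).
  eapply Rle_trans.
  { apply (abs_RInt_le_RInt _ (fun x => / 2 * (a * (f x * f x) + / a * (g x * g x)))); auto.
    - apply Ex. intros. apply continuous_mult_R; auto.
    - apply ex_RInt_scal_R, ex_RInt_plus_R; apply ex_RInt_scal_R; auto.
    - intros x _. replace (/ 2 * (a * (f x * f x) + / a * (g x * g x)))
        with ((a * (f x * f x) + g x * g x / a) / 2) by (field; lra).
      apply Rabs_mult_le_Young, Ha. }
  rewrite RInt_scal_R by (apply ex_RInt_plus_R; apply ex_RInt_scal_R; auto).
  rewrite RInt_plus_R, !RInt_scal_R by (auto; apply ex_RInt_scal_R; auto).
  right. field. lra.
Qed.

Lemma RInt_sqr_le_Cauchy_Schwarz (u : R -> R) a b : a <= b -> (forall y, continuous u y) ->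
  (RInt u a b) ^ 2 <= (b - a) * RInt (fun y => u y * u y) a b.
Proof.
  intros Hab Hu.
  destruct (Req_dec a b) as [<- | Hab'].
  { assert (E : RInt u a a = 0) by exact (RInt_point (V := R_CompleteNormedModule) a u).
    rewrite E. replace (a - a) with 0 by ring. simpl. lra. }
  assert (Ex : forall h : R -> R, (forall x, continuous h x) -> ex_RInt h a b)
    by (intros h Hh; apply ex_RInt_continuous_R; auto).
  set (m := RInt u a b / (b - a)).
  assert (H : 0 <= RInt (fun y => u y * u y + (-2 * m * u y + m * m)) a b).
  { rewrite (RInt_ext_R _ (fun y => (u y - m) * (u y - m))) by (intros; ring).
    apply RInt_ge_0; [exact Hab | | intros; apply Rle_0_sqr].
    apply Ex. intros. apply continuous_sqr_R, continuous_minus_R; auto using continuous_const. }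
  assert (E1 : ex_RInt (fun y => u y * u y) a b) by (apply Ex; intros; apply continuous_sqr_R; auto).
  assert (E2 : ex_RInt (fun y => -2 * m * u y) a b) by (apply ex_RInt_scal_R, Ex; auto).
  assert (E3 : ex_RInt (fun _ => m * m) a b) by (apply Ex; intros; apply continuous_const).
  rewrite RInt_plus_R, RInt_plus_R, RInt_scal_R, RInt_const_R in H
    by (auto; try apply ex_RInt_plus_R; auto; apply Ex; auto).
  unfold m in H. revert H.
  generalize (RInt (fun y => u y * u y) a b) (RInt u a b). intros I S H.
  assert (Hd : 0 < b - a) by lra.
  replace (I + (-2 * (S / (b - a)) * S + (b - a) * (S / (b - a) * (S / (b - a)))))
    with ((( b - a) * I - S ^ 2) / (b - a)) in H by (field; lra).
  apply Rmult_le_compat_r with (r := b - a) in H; [|lra].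
  replace ((( b - a) * I - S ^ 2) / (b - a) * (b - a)) with ((b - a) * I - S ^ 2) in H by (field; lra).
  lra.
Qed.

Lemma RInt_parts_vanishing (f f' g g' : R -> R) a b :
  (forall x, is_derive f x (f' x)) -> (forall x, is_derive g x (g' x)) ->
  (forall x, continuous f' x) -> (forall x, continuous g' x) -> g a = 0 -> g b = 0 ->
  RInt (fun x => f' x * g x) a b = - RInt (fun x => f x * g' x) a b.
Proof.
  intros Hf Hg Hf' Hg' Ha Hb.
  assert (Cf : forall x, continuous f x) by (intros; apply ex_derive_continuous_R; eexists; apply Hf).
  assert (Cg : forall x, continuous g x) by (intros; apply ex_derive_continuous_R; eexists; apply Hg).
  assert (E : RInt (fun x => f' x * g x + f x * g' x) a b = f b * g b - f a * g a).
  { apply (RInt_derive_R (fun x => f x * g x)).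
    - intros x _. apply is_derive_mult_R; auto.
    - intros x _. apply continuous_plus_R; apply continuous_mult_R; auto. }
  rewrite RInt_plus_R, Ha, Hb, !Rmult_0_r in E
    by (apply ex_RInt_continuous_R; intros; apply continuous_mult_R; auto).
  lra.
Qed.

(* Write [f x] as the integral of [f'] from [a] and apply Cauchy-Schwarz. *)
Lemma Poincare (f f' : R -> R) a b : a <= b ->
  (forall x, is_derive f x (f' x)) -> (forall x, continuous f' x) -> f a = 0 ->
  RInt (fun x => f x * f x) a b <= (b - a) ^ 2 * RInt (fun x => f' x * f' x) a b.
Proof.
  intros Hab Hf Hf' Ha.
  assert (Cf : forall x, continuous f x) by (intros; apply ex_derive_continuous_R; eexists; apply Hf).
  assert (Ex2 : forall c d, ex_RInt (fun y => f' y * f' y) c d)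
    by (intros; apply ex_RInt_continuous_R; intros; apply continuous_sqr_R; auto).
  set (I := RInt (fun x => f' x * f' x) a b).
  assert (Hpt : forall x, a <= x <= b -> f x * f x <= (b - a) * I).
  { intros x Hx.
    assert (Ef : f x = RInt f' a x) by (rewrite (RInt_derive_R f f'); auto; rewrite Ha; ring).
    pose proof (RInt_sqr_le_Cauchy_Schwarz f' a x ltac:(lra) Hf') as Hcs. rewrite <- Ef in Hcs.
    assert (H0 : 0 <= RInt (fun y => f' y * f' y) x b) by (apply RInt_ge_0; auto; [lra | intros; apply Rle_0_sqr]).
    assert (H1 : 0 <= RInt (fun y => f' y * f' y) a x) by (apply RInt_ge_0; auto; [lra | intros; apply Rle_0_sqr]).
    assert (Hle : RInt (fun y => f' y * f' y) a x <= I)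
      by (unfold I; rewrite <- (RInt_Chasles_R _ a x b); auto; lra).
    replace (f x * f x) with (f x ^ 2) by ring.
    eapply Rle_trans; [exact Hcs|]. apply Rmult_le_compat; lra. }
  eapply Rle_trans.
  { apply (RInt_le _ (fun _ => (b - a) * I)); auto.
    - apply ex_RInt_continuous_R; intros; apply continuous_sqr_R; auto.
    - apply ex_RInt_continuous_R; intros; apply continuous_const.
    - intros x Hx. apply Hpt. lra. }
  rewrite RInt_const_R. right. ring.
Qed.

(** * The memory kernel *)

Section Kernel.

Variables (kappa : R -> R) (delta : R).
Hypothesis HK : kernel_hyp kappa delta.

Lemma kernel_ex_derive s : 0 <= s -> ex_derive kappa s.
Proof. apply HK. Qed.

Lemma kernel_Derive_continuous s : 0 <= s -> continuous (Derive kappa) s.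
Proof. apply HK. Qed.

Lemma kernel_pos s : 0 <= s -> 0 < kappa s.
Proof. apply HK. Qed.

Lemma kernel_Derive_nonpos s : 0 <= s -> Derive kappa s <= 0.
Proof. apply HK. Qed.

Lemma kernel_delta_pos : 0 < delta.
Proof. apply HK. Qed.

Lemma kernel_Derive_le s : 0 <= s -> Derive kappa s <= - delta * kappa s.
Proof. apply HK. Qed.

Lemma kernel_continuous s : 0 <= s -> continuous kappa s.
Proof. intros Hs. apply ex_derive_continuous_R, kernel_ex_derive, Hs. Qed.

Lemma is_Iinf_kernel : is_Iinf kappa (g0 kappa).
Proof.
  destruct HK as (_ & _ & Hex & _).
  exact (@RInt_gen_correct R_CompleteNormedModule _ _ (Proper_StrongProper _ (at_point_filter 0))
           (Proper_StrongProper _ (Rbar_locally_filter p_infty)) kappa Hex).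
Qed.

Lemma ex_RInt_kernel_mult (f : R -> R) b : 0 <= b -> (forall s, 0 <= s -> continuous f s) ->
  ex_RInt (fun s => kappa s * f s) 0 b.
Proof.
  intros Hb Hf. apply ex_RInt_continuous_le; auto. intros z Hz.
  apply continuous_mult_R; [apply kernel_continuous | apply Hf]; lra.
Qed.

Lemma ex_RInt_kernel_Derive_mult (f : R -> R) b : 0 <= b -> (forall s, 0 <= s -> continuous f s) ->
  ex_RInt (fun s => Derive kappa s * f s) 0 b.
Proof.
  intros Hb Hf. apply ex_RInt_continuous_le; auto. intros z Hz.
  apply continuous_mult_R; [apply kernel_Derive_continuous | apply Hf]; lra.
Qed.

Lemma ex_RInt_kernel b : 0 <= b -> ex_RInt kappa 0 b.
Proof.
  intros Hb. apply (ex_RInt_ext_R (fun s => kappa s * 1)); [intros; ring|].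
  apply ex_RInt_kernel_mult; auto using continuous_const.
Qed.

Lemma g0_pos : 0 < g0 kappa.
Proof.
  assert (H1 : 0 < RInt kappa 0 1).
  { apply RInt_gt_0; [lra | intros; apply kernel_pos; lra | intros; apply kernel_continuous; lra]. }
  assert (RInt kappa 0 1 <= g0 kappa).
  { apply (RInt_le_is_Iinf kappa); [lra | apply is_Iinf_kernel | apply ex_RInt_kernel |].
    intros s Hs. left. apply kernel_pos, Hs. }
  lra.
Qed.

Lemma RInt_kernel_Derive Y : 0 <= Y -> RInt (Derive kappa) 0 Y = kappa Y - kappa 0.
Proof.
  intros HY. apply RInt_derive_R; intros x Hx; rewrite Rmin_left, Rmax_right in Hx by lra.
  - apply Derive_correct, kernel_ex_derive. lra.
  - apply kernel_Derive_continuous. lra.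
Qed.

Definition kmoment (n : nat) (s : R) : R := kappa s * (1 + s) ^ n.
Definition dkmoment (n : nat) (s : R) : R := - Derive kappa s * (1 + s) ^ n.

Lemma continuous_pow_1plus n x : continuous (fun s : R => (1 + s) ^ n) x.
Proof. apply ex_derive_continuous_R. auto_derive. auto. Qed.

Lemma ex_RInt_kmoment n b : 0 <= b -> ex_RInt (kmoment n) 0 b.
Proof. intros Hb. apply ex_RInt_kernel_mult; auto using continuous_pow_1plus. Qed.

Lemma ex_RInt_dkmoment n b : 0 <= b -> ex_RInt (dkmoment n) 0 b.
Proof.
  intros Hb. apply (ex_RInt_ext_R (fun s => -1 * (Derive kappa s * (1 + s) ^ n)));
    [intros; unfold dkmoment; ring|].
  apply ex_RInt_scal_R, ex_RInt_kernel_Derive_mult; auto using continuous_pow_1plus.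
Qed.

Lemma kmoment_ge0 n s : 0 <= s -> 0 <= kmoment n s.
Proof.
  intros Hs. unfold kmoment. apply Rmult_le_pos; [left; apply kernel_pos, Hs | apply pow_le; lra].
Qed.

Lemma dkmoment_ge0 n s : 0 <= s -> 0 <= dkmoment n s.
Proof.
  intros Hs. unfold dkmoment. pose proof (kernel_Derive_nonpos s Hs).
  apply Rmult_le_pos; [lra | apply pow_le; lra].
Qed.

Lemma kmoment_le_dkmoment n s : 0 <= s -> kmoment n s <= / delta * dkmoment n s.
Proof.
  intros Hs. unfold kmoment, dkmoment. pose proof kernel_delta_pos. pose proof (kernel_Derive_le s Hs).
  assert (kappa s <= / delta * - Derive kappa s).
  { apply Rmult_le_reg_l with delta; [lra|]. rewrite <- Rmult_assoc, Rinv_r by lra. lra. }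
  rewrite <- Rmult_assoc. apply Rmult_le_compat_r; [apply pow_le |]; lra.
Qed.

Lemma RInt_kmoment_le_dkmoment n b : 0 <= b ->
  RInt (kmoment n) 0 b <= / delta * RInt (dkmoment n) 0 b.
Proof.
  intros Hb. rewrite <- RInt_scal_R by (apply ex_RInt_dkmoment; auto).
  apply RInt_le; auto using ex_RInt_kmoment.
  - apply ex_RInt_scal_R, ex_RInt_dkmoment, Hb.
  - intros x Hx. apply kmoment_le_dkmoment. lra.
Qed.

Lemma RInt_dkmoment_S n b : 0 <= b ->
  RInt (dkmoment (S n)) 0 b + kappa b * (1 + b) ^ S n = kappa 0 + INR (S n) * RInt (kmoment n) 0 b.
Proof.
  intros Hb.
  assert (E : RInt (fun s => Derive kappa s * (1 + s) ^ S n + INR (S n) * kmoment n s) 0 b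
              = kappa b * (1 + b) ^ S n - kappa 0 * (1 + 0) ^ S n).
  { apply (RInt_derive_R (fun s => kappa s * (1 + s) ^ S n)); intros x Hx;
      rewrite Rmin_left, Rmax_right in Hx by lra.
    - replace (Derive kappa x * (1 + x) ^ S n + INR (S n) * kmoment n x)
        with (Derive kappa x * (1 + x) ^ S n + kappa x * (INR (S n) * (1 + x) ^ n))
        by (unfold kmoment; ring).
      apply is_derive_mult_R; [apply Derive_correct, kernel_ex_derive; lra|].
      auto_derive; auto. simpl. ring.
    - apply continuous_plus_R.
      + apply continuous_mult_R; [apply kernel_Derive_continuous; lra | apply continuous_pow_1plus].
      + apply continuous_mult_R; [apply continuous_const|].
        apply continuous_mult_R; [apply kernel_continuous; lra | apply continuous_pow_1plus]. }
  rewrite RInt_plus_R, RInt_scal_R in E by auto using ex_RInt_kmoment, ex_RInt_scal_R,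
    ex_RInt_kernel_Derive_mult, continuous_pow_1plus.
  rewrite Rplus_0_r, pow1 in E.
  replace (RInt (dkmoment (S n)) 0 b) with (- RInt (fun s => Derive kappa s * (1 + s) ^ S n) 0 b).
  - lra.
  - rewrite <- (Rmult_1_l (RInt _ 0 b)), Ropp_mult_distr_l, <- RInt_scal_R
      by (apply ex_RInt_kernel_Derive_mult; auto using continuous_pow_1plus).
    apply RInt_ext_R. intros. unfold dkmoment. ring.
Qed.

(* Since [kappa' <= - delta kappa], each moment is controlled by the previous one. *)
Lemma RInt_kmoment_bounded n : exists C, forall b, 0 <= b -> RInt (kmoment n) 0 b <= C.
Proof.
  pose proof kernel_delta_pos as Hd.
  induction n as [| n [C HC]].
  - exists (g0 kappa). intros b Hb. apply (RInt_le_is_Iinf _ _ b Hb); auto using ex_RInt_kmoment.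
    + apply (is_Iinf_ext kappa); [intros; unfold kmoment; ring | apply is_Iinf_kernel].
    + intros; apply kmoment_ge0; auto.
  - exists (/ delta * (kappa 0 + INR (S n) * C)). intros b Hb.
    eapply Rle_trans; [apply RInt_kmoment_le_dkmoment, Hb|].
    apply Rmult_le_compat_l; [left; apply Rinv_0_lt_compat, Hd|].
    pose proof (RInt_dkmoment_S n b Hb). pose proof (HC b Hb).
    pose proof (kmoment_ge0 (S n) b Hb). unfold kmoment in *.
    pose proof (pos_INR (S n)). nra.
Qed.

Lemma dkmoment_S_bounded n :
  exists C, forall b, 0 <= b -> RInt (dkmoment (S n)) 0 b <= C /\ kappa b * (1 + b) ^ S n <= C.
Proof.
  destruct (RInt_kmoment_bounded n) as [C HC].
  exists (kappa 0 + INR (S n) * C). intros b Hb.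
  pose proof (RInt_dkmoment_S n b Hb). pose proof (HC b Hb). pose proof (pos_INR (S n)).
  assert (0 <= RInt (dkmoment (S n)) 0 b)
    by (apply RInt_ge_0; auto using ex_RInt_dkmoment; intros; apply dkmoment_ge0; lra).
  pose proof (kmoment_ge0 (S n) b Hb). unfold kmoment in *. split; nra.
Qed.

Lemma ex_Iinf_kmoment n : exists l, is_Iinf (kmoment n) l.
Proof.
  destruct (RInt_kmoment_bounded n) as [C HC].
  apply (ex_Iinf_nonneg_bounded _ C); auto using ex_RInt_kmoment, kmoment_ge0.
Qed.

Lemma ex_Iinf_dkmoment_S n : exists l, is_Iinf (dkmoment (S n)) l.
Proof.
  destruct (dkmoment_S_bounded n) as [C HC].
  apply (ex_Iinf_nonneg_bounded _ C); auto using ex_RInt_dkmoment, dkmoment_ge0.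
  intros b Hb. apply HC, Hb.
Qed.

Lemma kernel_linear_lim : filterlim (fun Y => kappa Y * (1 + Y)) pinf (locally 0).
Proof.
  destruct (dkmoment_S_bounded 1) as [C HC].
  assert (HC0 : 0 <= C)
    by (destruct (HC 0 ltac:(lra)) as [_ H]; pose proof (kernel_pos 0 ltac:(lra)); simpl in H; nra).
  apply filterlim_locally. intros eps.
  exists (Rmax 0 (C / eps)). intros Y HY. change (Rabs (kappa Y * (1 + Y) - 0) < eps).
  pose proof (Rmax_l 0 (C / eps)). pose proof (Rmax_r 0 (C / eps)).
  destruct (HC Y ltac:(lra)) as [_ HY2]. pose proof (kernel_pos Y ltac:(lra)).
  rewrite Rminus_0_r, Rabs_right by nra.
  assert (C < eps * (1 + Y)).
  { apply Rmult_lt_reg_l with (/ eps); [apply Rinv_0_lt_compat, cond_pos|].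
    rewrite <- Rmult_assoc, Rinv_l by (apply Rgt_not_eq, cond_pos). unfold Rdiv in *. lra. }
  apply Rmult_lt_reg_r with (1 + Y); [lra|]. simpl in HY2. nra.
Qed.

End Kernel.

Lemma C2_ex_derive_t (f : R -> R -> R) x t : C2 f -> ex_derive (fun y => f x y) t.
Proof. intros (_ & H & _). exact (H x t). Qed.

Lemma C2_cont (f : R -> R -> R) : C2 f -> cont2 f.
Proof. intros (_ & _ & _ & _ & _ & _ & H & _). exact H. Qed.

Lemma C2_dt_cont (f : R -> R -> R) : C2 f -> cont2 (dt f).
Proof. intros (_ & _ & _ & _ & _ & _ & _ & _ & H & _). exact H. Qed.

Lemma C2_dt_ex_derive_x (f : R -> R -> R) x t : C2 f -> ex_derive (fun y => dt f y t) x.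
Proof. intros (_ & _ & _ & _ & H & _). exact (H x t). Qed.

Lemma C2_dx_dt_cont (f : R -> R -> R) : C2 f -> cont2 (dx (dt f)).
Proof. intros (_ & _ & _ & _ & _ & _ & _ & _ & _ & _ & _ & H & _). exact H. Qed.

Lemma C2_dt_dx_cont (f : R -> R -> R) : C2 f -> cont2 (dt (dx f)).
Proof. intros (_ & _ & _ & _ & _ & _ & _ & _ & _ & _ & H & _). exact H. Qed.

Lemma C2_dt_dx (f : R -> R -> R) x t : C2 f -> dt (dx f) x t = dx (dt f) x t.
Proof.
  intros (Hx & Ht & _ & Hxt & Htx & _ & _ & _ & _ & _ & Hc_tx & Hc_xt & _).
  symmetry. apply (Schwarz f x t).
  - exists (mkposreal 1 Rlt_0_1). intros u v _ _.
    exact (conj (Hx u v) (conj (Ht u v) (conj (Htx u v) (Hxt u v)))).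
  - apply continuity_2d_pt_filterlim. exact (Hc_xt x t).
  - apply continuity_2d_pt_filterlim. exact (Hc_tx x t).
Qed.

Lemma cont2_jointly_continuous (f : R -> R -> R) :
  cont2 f -> jointly_continuous (P := R_UniformSpace) f.
Proof. intros H x t. apply H. Qed.

Lemma cont2_at (f : R -> R -> R) t :
  cont2 f -> jointly_continuous (P := R_UniformSpace) (fun x (_ : R) => f x t).
Proof.
  intros H. apply (jointly_continuous_comp f (fun x => x) (fun _ : R => t));
    [exact H | intros; apply continuous_id | intros; apply continuous_const].
Qed.

Lemma cont3_comp {U : UniformSpace} (F : R -> R -> R -> R) (a b c : U -> R) p :
  cont3 F -> continuous a p -> continuous b p -> continuous c p ->
  continuous (fun q => F (a q) (b q) (c q)) p.
Proof.
  intros HF Ha Hb Hc.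
  apply (continuous_comp (fun q => (a q, b q, c q))
           (fun z : R * R * R => F (fst (fst z)) (snd (fst z)) (snd z))).
  - apply continuous_pair; [apply continuous_pair|]; auto.
  - apply HF.
Qed.

Lemma cont3_at (F : R -> R -> R -> R) t :
  cont3 F -> jointly_continuous (P := R_UniformSpace) (fun x s => F x s t).
Proof.
  intros H x s. apply (cont3_comp F fst snd (fun _ => t)); auto using continuous_fst, continuous_snd, continuous_const.
Qed.

Lemma cont3_in_t (F : R -> R -> R -> R) s :
  cont3 F -> jointly_continuous (P := R_UniformSpace) (fun x t => F x s t).
Proof.
  intros H x t. apply (cont3_comp F fst (fun _ => s) snd); auto using continuous_fst, continuous_snd, continuous_const.
Qed.

Lemma cont3_in_st (F : R -> R -> R -> R) :
  cont3 F -> jointly_continuous (P := prod_UniformSpace R_UniformSpace R_UniformSpace)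
                (fun x p => F x (fst p) (snd p)).
Proof.
  intros H x p. apply (cont3_comp F fst (fun z => fst (snd z)) (fun z => snd (snd z))); auto.
  - apply continuous_fst.
  - apply (continuous_comp snd fst); [apply continuous_snd | apply continuous_fst].
  - apply (continuous_comp snd snd); apply continuous_snd.
Qed.

Lemma cont2_in_st (f : R -> R -> R) :
  cont2 f -> jointly_continuous (P := prod_UniformSpace R_UniformSpace R_UniformSpace)
                (fun x p => f x (snd p)).
Proof.
  intros H. apply (jointly_continuous_comp f (fun x => x) snd);
    [exact H | intros; apply continuous_id | intros; apply continuous_snd].
Qed.

Lemma eta_regular_bounds (eta : R -> R -> R -> R) T : eta_regular eta -> 0 < T ->
  exists B, 0 <= B /\ forall x s t, 0 <= x <= PI -> 0 <= s -> 0 < t <= T ->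
     Rabs (eta x s t) <= B * (1 + s) /\ Rabs (dx3 eta x s t) <= B * (1 + s) /\
     Rabs (dx3 (dx3 eta) x s t) <= B * (1 + s) /\ Rabs (ds3 eta x s t) <= B * (1 + s) /\
     Rabs (dt3 eta x s t) <= B * (1 + s).
Proof.
  intros (_ & _ & _ & _ & _ & _ & _ & _ & _ & H) HT.
  destruct (H T HT) as [B HB]. exists B. split; auto.
  destruct (HB 0 0 T ltac:(pose proof PI_RGT_0; lra) ltac:(lra) ltac:(lra)) as [H1 _].
  pose proof (Rabs_pos (eta 0 0 T)). lra.
Qed.

Section EtaRegular.

Variable eta : R -> R -> R -> R.
Hypothesis Heta : eta_regular eta.

Lemma eta_regular_ex_derive_x x s t : ex_derive (fun y => eta y s t) x.
Proof. destruct Heta as (H & _). exact (H x s t). Qed.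

Lemma eta_regular_ex_derive_xx x s t : ex_derive (fun y => dx3 eta y s t) x.
Proof. destruct Heta as (_ & H & _). exact (H x s t). Qed.

Lemma eta_regular_ex_derive_s x s t : ex_derive (fun y => eta x y t) s.
Proof. destruct Heta as (_ & _ & H & _). exact (H x s t). Qed.

Lemma eta_regular_ex_derive_t x s t : ex_derive (fun y => eta x s y) t.
Proof. destruct Heta as (_ & _ & _ & H & _). exact (H x s t). Qed.

Lemma eta_regular_cont : cont3 eta.
Proof. destruct Heta as (_ & _ & _ & _ & H & _). exact H. Qed.

Lemma eta_regular_dx_cont : cont3 (dx3 eta).
Proof. destruct Heta as (_ & _ & _ & _ & _ & H & _). exact H. Qed.

Lemma eta_regular_dxx_cont : cont3 (dx3 (dx3 eta)).
Proof. destruct Heta as (_ & _ & _ & _ & _ & _ & H & _). exact H. Qed.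

Lemma eta_regular_ds_cont : cont3 (ds3 eta).
Proof. destruct Heta as (_ & _ & _ & _ & _ & _ & _ & H & _). exact H. Qed.

Lemma eta_regular_dt_cont : cont3 (dt3 eta).
Proof. destruct Heta as (_ & _ & _ & _ & _ & _ & _ & _ & H & _). exact H. Qed.

End EtaRegular.

Lemma cont2_continuous_x (f : R -> R -> R) t x : cont2 f -> continuous (fun y => f y t) x.
Proof. intros H. apply (jointly_continuous_l f t x), cont2_jointly_continuous, H. Qed.

Lemma cont3_continuous_x (F : R -> R -> R -> R) s t x : cont3 F -> continuous (fun y => F y s t) x.
Proof. intros H. apply (jointly_continuous_l (fun x s => F x s t) s x), cont3_at, H. Qed.

Lemma ex_RInt_cont2_mult_cont3 (f : R -> R -> R) (F : R -> R -> R -> R) s t a b :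
  cont2 f -> cont3 F -> ex_RInt (fun x => f x t * F x s t) a b.
Proof.
  intros Hf HF. apply ex_RInt_continuous_R. intros x _.
  apply continuous_mult_R; [apply cont2_continuous_x, Hf | apply cont3_continuous_x, HF].
Qed.

(* With a = g/(2 k0) and bb = eps/|beta| in the lower bound, the terms in V are absorbed
   into K through delta V <= -K. *)
Lemma F1_bound_arith (c g k0 delta beta eps Th Ph V K D : R) :
  0 < c -> 0 < g -> 0 < k0 -> 0 < delta -> beta <> 0 -> 0 < eps ->
  0 <= Th -> K <= 0 -> delta * V <= - K ->
  (c * Th - Rabs beta * (eps / Rabs beta) / 2 * Ph - V / 2) * g
  - (Rabs beta / (2 * (eps / Rabs beta)) + g / 2) * V
  - c * (g / (2 * k0)) * Th / 2 * k0 + c * PI ^ 2 / (2 * (g / (2 * k0))) * K <= c * D ->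
  - (2 * c / g) * D <= - c * Th - V + eps * Ph
     - (3 / delta + beta ^ 2 / (g * delta) + 2 * c * PI ^ 2 * k0 / g ^ 2) * (1 + / eps) * K.
Proof.
  intros Hc Hg Hk0 Hd Hb He HTh HK HVK HL.
  assert (Hab : 0 < Rabs beta) by (apply Rabs_pos_lt, Hb).
  assert (Hbeta2 : Rabs beta * Rabs beta = beta ^ 2)
    by (rewrite <- Rabs_mult, Rabs_right by apply Rle_ge, Rle_0_sqr; ring).
  set (p := beta ^ 2 / (eps * g)).
  set (q := 2 * c * PI ^ 2 * k0 / g ^ 2).
  assert (Hp : 0 <= p)
    by (unfold p; apply Rdiv_le_0_compat; [apply pow2_ge_0 | apply Rmult_lt_0_compat; lra]).
  assert (Hq : 0 <= q).
  { unfold q. apply Rdiv_le_0_compat; [| apply pow_lt; lra].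
    pose proof (pow2_ge_0 PI).
    apply Rmult_le_pos; [apply Rmult_le_pos|]; [apply Rmult_le_pos| |]; lra. }
  assert (SA : - (2 * c / g) * D <= eps * Ph - 3 / 2 * c * Th + (2 + p) * V - q * K).
  { replace (- (2 * c / g) * D) with (- (2 / g) * (c * D)) by (field; lra).
    replace (eps * Ph - 3 / 2 * c * Th + (2 + p) * V - q * K)
      with (- (2 / g) * ((c * Th - Rabs beta * (eps / Rabs beta) / 2 * Ph - V / 2) * g
             - (Rabs beta / (2 * (eps / Rabs beta)) + g / 2) * V
             - c * (g / (2 * k0)) * Th / 2 * k0 + c * PI ^ 2 / (2 * (g / (2 * k0))) * K)).
    - apply Rmult_le_compat_neg_l; [|exact HL]. assert (0 < 2 / g) by (apply Rdiv_lt_0_compat; lra). lra.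
    - unfold p, q. replace (Rabs beta / (2 * (eps / Rabs beta))) with (Rabs beta * Rabs beta / (2 * eps))
        by (field; lra).
      rewrite Hbeta2. field. lra. }
  assert (SV : (3 + p) * V <= - ((3 + p) / delta) * K).
  { replace (- ((3 + p) / delta) * K) with ((3 + p) * (- K / delta)) by (field; lra).
    apply Rmult_le_compat_l; [lra|].
    apply Rmult_le_reg_l with delta; [lra|]. replace (delta * (- K / delta)) with (- K) by (field; lra). lra. }
  assert (SM : (3 + p) / delta + q
               <= (3 / delta + beta ^ 2 / (g * delta) + q) * (1 + / eps)).
  { assert (E : beta ^ 2 / (g * delta) * / eps = p / delta) by (unfold p; field; lra).
    assert (0 <= 3 / delta * / eps) by (apply Rmult_le_pos; left; [apply Rdiv_lt_0_compat | apply Rinv_0_lt_compat]; lra).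
    assert (0 <= q * / eps) by (apply Rmult_le_pos; [lra | left; apply Rinv_0_lt_compat; lra]).
    assert (0 <= beta ^ 2 / (g * delta))
      by (apply Rdiv_le_0_compat; [apply pow2_ge_0 | apply Rmult_lt_0_compat; lra]).
    replace ((3 / delta + beta ^ 2 / (g * delta) + q) * (1 + / eps))
      with (3 / delta + beta ^ 2 / (g * delta) + q + 3 / delta * / eps + beta ^ 2 / (g * delta) * / eps
            + q * / eps) by ring.
    rewrite E. replace ((3 + p) / delta) with (3 / delta + p / delta) by (field; lra). lra. }
  assert (SK := Rmult_le_compat_neg_l K _ _ HK SM).
  fold q. nra.
Qed.

Definition F1_constant (c beta delta : R) (kappa : R -> R) : R :=
  3 / delta + beta ^ 2 / (g0 kappa * delta) + 2 * c * PI ^ 2 * kappa 0 / g0 kappa ^ 2.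

Lemma F1_constant_pos c beta delta kappa : 0 < c -> kernel_hyp kappa delta ->
  0 < F1_constant c beta delta kappa.
Proof.
  intros Hc HK. unfold F1_constant.
  pose proof (g0_pos kappa delta HK). pose proof (kernel_pos kappa delta HK 0 (Rle_refl 0)).
  pose proof (kernel_delta_pos kappa delta HK). pose proof PI_RGT_0. pose proof (pow2_ge_0 PI).
  assert (0 < 3 / delta) by (apply Rdiv_lt_0_compat; lra).
  assert (0 <= beta ^ 2 / (g0 kappa * delta))
    by (apply Rdiv_le_0_compat; [apply pow2_ge_0 | apply Rmult_lt_0_compat; lra]).
  assert (0 <= 2 * c * PI ^ 2 * kappa 0 / g0 kappa ^ 2).
  { apply Rdiv_le_0_compat; [| apply pow_lt; lra].
    apply Rmult_le_pos; [apply Rmult_le_pos|]; [apply Rmult_le_pos| |]; lra. }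
  lra.
Qed.

(** * The derivative of F_1 *)

Section Solution.

Variables (c beta delta : R) (kappa : R -> R) (phi theta : R -> R -> R) (eta : R -> R -> R -> R).
Hypothesis Hc : 0 < c.
Hypothesis HK : kernel_hyp kappa delta.
Hypothesis Hphi : C2 phi.
Hypothesis Htheta : C2 theta.
Hypothesis Heta : eta_regular eta.
Hypothesis theta_eq : forall x t, 0 < x < PI -> 0 < t ->
  c * dt theta x t = - beta * dt (dx phi) x t + Iinf (fun s => kappa s * dx3 (dx3 eta) x s t).
Hypothesis eta_eq : forall x s t, 0 < x < PI -> 0 < s -> 0 < t ->
  dt3 eta x s t = theta x t - ds3 eta x s t.
Hypothesis eta_bc : forall s t, 0 <= s -> 0 < t -> eta 0 s t = 0 /\ eta PI s t = 0.
Hypothesis eta_0 : forall x t, 0 < t -> eta x 0 t = 0.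
Variable t0 : R.
Hypothesis Ht0 : 0 < t0.

Definition F1_integrand s tau := kappa s * ip (fun x => theta x tau) (fun x => eta x s tau).

Definition F1_integrand_dt s tau :=
  kappa s * RInt (fun x => dt theta x tau * eta x s tau + theta x tau * dt3 eta x s tau) 0 PI.

Lemma jointly_continuous_F1_integrand_dt s : jointly_continuous (P := R_UniformSpace)
  (fun x t => dt theta x t * eta x s t + theta x t * dt3 eta x s t).
Proof.
  apply jointly_continuous_plus; apply jointly_continuous_mult.
  - apply cont2_jointly_continuous, C2_dt_cont, Htheta.
  - apply cont3_in_t, eta_regular_cont, Heta.
  - apply cont2_jointly_continuous, C2_cont, Htheta.
  - apply cont3_in_t, eta_regular_dt_cont, Heta.
Qed.

Lemma is_derive_F1_integrand s tau : is_derive (fun z => F1_integrand s z) tau (F1_integrand_dt s tau).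
Proof.
  unfold F1_integrand, F1_integrand_dt, ip.
  apply (is_derive_scal (fun z => RInt (fun x => theta x z * eta x s z) 0 PI)).
  assert (HD : forall x z, Derive (fun u => theta x u * eta x s u) z
                           = dt theta x z * eta x s z + theta x z * dt3 eta x s z).
  { intros x z. apply Derive_mult; [apply C2_ex_derive_t, Htheta | apply eta_regular_ex_derive_t, Heta]. }
  rewrite (RInt_ext_R _ (fun x => Derive (fun u => theta x u * eta x s u) tau))
    by (intros; rewrite HD; reflexivity).
  apply (is_derive_RInt_param (fun z x => theta x z * eta x s z) 0 PI tau).
  - apply filter_forall. intros z t _. apply (ex_derive_mult (fun u => theta t u) (fun u => eta t s u)).
    + apply C2_ex_derive_t, Htheta.
    + apply eta_regular_ex_derive_t, Heta.
  - intros t _. apply continuity_2d_pt_ext with (fun u v => dt theta v u * eta v s u + theta v u * dt3 eta v s u).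
    + intros; rewrite HD; reflexivity.
    + apply jointly_continuous_2d, jointly_continuous_swap, jointly_continuous_F1_integrand_dt.
  - apply filter_forall. intros z.
    apply (jointly_continuous_ex_RInt (fun x t => theta x t * eta x s t) z).
    apply jointly_continuous_mult; [apply cont2_jointly_continuous, C2_cont, Htheta |].
    apply cont3_in_t, eta_regular_cont, Heta.
Qed.

Lemma F1_integrand_dt_continuous s tau : 0 <= s ->
  continuity_2d_pt (fun u v => F1_integrand_dt v u) tau s.
Proof.
  intros Hs. apply continuity_2d_pt_filterlim. unfold F1_integrand_dt.
  set (I2 := fun p : R * R => RInt (fun x => dt theta x (snd p) * eta x (fst p) (snd p)
                                            + theta x (snd p) * dt3 eta x (fst p) (snd p)) 0 PI).
  change (continuous (fun z : R * R => kappa (snd z) * I2 (snd z, fst z)) (tau, s)).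
  apply continuous_mult_R.
  - apply (continuous_comp snd kappa); [apply continuous_snd | apply (kernel_continuous kappa delta HK), Hs].
  - apply (continuous_comp (fun z : R * R => (snd z, fst z)) I2).
    + apply continuous_pair; [apply continuous_snd | apply continuous_fst].
    + apply (continuous_RInt_param (P := prod_UniformSpace R_UniformSpace R_UniformSpace)
        (fun x p => dt theta x (snd p) * eta x (fst p) (snd p) + theta x (snd p) * dt3 eta x (fst p) (snd p)));
        [left; apply PI_RGT_0|].
      apply jointly_continuous_plus; apply jointly_continuous_mult.
      * apply cont2_in_st, C2_dt_cont, Htheta.
      * apply cont3_in_st, eta_regular_cont, Heta.
      * apply cont2_in_st, C2_cont, Htheta.
      * apply cont3_in_st, eta_regular_dt_cont, Heta.
Qed.

Lemma theta_L1_bounded : exists A, 0 <= A /\ forall tau, t0 - t0 / 2 < tau < t0 + t0 / 2 ->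
  RInt (fun x => Rabs (dt theta x tau) + Rabs (theta x tau)) 0 PI <= A.
Proof.
  set (L := fun tau => RInt (fun x => Rabs (dt theta x tau) + Rabs (theta x tau)) 0 PI).
  assert (HJ : jointly_continuous (P := R_UniformSpace) (fun x t => Rabs (dt theta x t) + Rabs (theta x t))).
  { apply jointly_continuous_plus; apply jointly_continuous_abs, cont2_jointly_continuous.
    - apply C2_dt_cont, Htheta.
    - apply C2_cont, Htheta. }
  destruct (continuity_ab_maj L (t0 - t0 / 2) (t0 + t0 / 2) ltac:(lra)) as [Mx [HMx _]].
  { intros z _. apply continuity_pt_filterlim.
    exact (continuous_RInt_param _ 0 PI z (Rlt_le _ _ PI_RGT_0) HJ). }
  exists (L Mx). split.
  - apply RInt_ge_0; [left; apply PI_RGT_0 | exact (jointly_continuous_ex_RInt _ Mx 0 PI HJ) |].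
    intros x _. pose proof (Rabs_pos (dt theta x Mx)). pose proof (Rabs_pos (theta x Mx)). lra.
  - intros tau Ht. apply HMx. lra.
Qed.

Lemma kernel_RInt_le_kmoment (F w : R -> R) s A B : 0 <= s -> 0 <= B ->
  ex_RInt F 0 PI -> ex_RInt w 0 PI -> RInt w 0 PI <= A ->
  (forall x, 0 <= x <= PI -> Rabs (F x) <= B * (1 + s) * w x) ->
  Rabs (kappa s * RInt F 0 PI) <= B * A * kmoment kappa 1 s.
Proof.
  intros Hs HB HF Hw HA HFw.
  pose proof (kernel_pos kappa delta HK s Hs) as Hk.
  rewrite Rabs_mult, (Rabs_right (kappa s)) by lra. unfold kmoment. rewrite pow_1.
  assert (Rabs (RInt F 0 PI) <= B * (1 + s) * RInt w 0 PI).
  { rewrite <- RInt_scal_R by exact Hw.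
    apply abs_RInt_le_RInt; [left; apply PI_RGT_0 | exact HF | apply ex_RInt_scal_R, Hw | exact HFw]. }
  assert (B * (1 + s) * RInt w 0 PI <= B * (1 + s) * A)
    by (apply Rmult_le_compat_l; [apply Rmult_le_pos |]; lra).
  replace (B * A * (kappa s * (1 + s))) with (kappa s * (B * (1 + s) * A)) by ring.
  apply Rmult_le_compat_l; lra.
Qed.

Lemma F1_integrand_bound : exists G, 0 <= G /\ forall s tau, 0 <= s -> t0 - t0 / 2 < tau < t0 + t0 / 2 ->
  Rabs (F1_integrand s tau) <= G * kmoment kappa 1 s /\
  Rabs (F1_integrand_dt s tau) <= G * kmoment kappa 1 s.
Proof.
  destruct (eta_regular_bounds eta (2 * t0) Heta ltac:(lra)) as [B [HB0 HB]].
  destruct theta_L1_bounded as [A [HA0 HA]].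
  exists (B * A). split; [apply Rmult_le_pos; auto|].
  intros s tau Hs Ht.
  set (w := fun x => Rabs (dt theta x tau) + Rabs (theta x tau)).
  assert (Hw : ex_RInt w 0 PI).
  { apply ex_RInt_continuous_R. intros x _. unfold w.
    apply continuous_plus_R; apply continuous_abs_R, jointly_continuous_l, cont2_jointly_continuous.
    - apply C2_dt_cont, Htheta.
    - apply C2_cont, Htheta. }
  split.
  - refine (kernel_RInt_le_kmoment _ w s A B Hs HB0 _ Hw (HA tau Ht) _).
    + apply (jointly_continuous_ex_RInt (fun x t => theta x t * eta x s t) tau).
      apply jointly_continuous_mult; [apply cont2_jointly_continuous, C2_cont, Htheta |].
      apply cont3_in_t, eta_regular_cont, Heta.
    + intros x Hx. assert (Hst : 0 < tau <= 2 * t0) by lra.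
      destruct (HB x s tau Hx Hs Hst) as [H1 _]. unfold w. cbv beta.
      rewrite Rabs_mult. pose proof (Rabs_pos (dt theta x tau)). pose proof (Rabs_pos (theta x tau)).
      assert (0 <= B * (1 + s)) by (apply Rmult_le_pos; lra).
      apply Rle_trans with (Rabs (theta x tau) * (B * (1 + s))); [apply Rmult_le_compat_l; lra|].
      rewrite Rmult_comm. apply Rmult_le_compat_l; lra.
  - refine (kernel_RInt_le_kmoment _ w s A B Hs HB0 _ Hw (HA tau Ht) _).
    + exact (jointly_continuous_ex_RInt _ tau 0 PI (jointly_continuous_F1_integrand_dt s)).
    + intros x Hx. assert (Hst : 0 < tau <= 2 * t0) by lra.
      destruct (HB x s tau Hx Hs Hst) as (H1 & _ & _ & _ & H5). unfold w. cbv beta.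
      eapply Rle_trans; [apply Rabs_triang|]. rewrite !Rabs_mult.
      pose proof (Rabs_pos (dt theta x tau)). pose proof (Rabs_pos (theta x tau)).
      apply Rle_trans with (Rabs (dt theta x tau) * (B * (1 + s)) + Rabs (theta x tau) * (B * (1 + s))).
      * apply Rplus_le_compat; apply Rmult_le_compat_l; lra.
      * right. ring.
Qed.

Lemma ex_RInt_F1_integrand_dt Y : 0 <= Y -> ex_RInt (fun s => F1_integrand_dt s t0) 0 Y.
Proof.
  intros HY. apply ex_RInt_continuous_le; auto. intros z Hz.
  apply (continuity_2d_pt_continuous_r (fun u v => F1_integrand_dt v u)), F1_integrand_dt_continuous. lra.
Qed.

Lemma is_Iinf_F1_integrand_dt : is_Iinf (fun s => F1_integrand_dt s t0) (Iinf (fun s => F1_integrand_dt s t0)).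
Proof.
  destruct F1_integrand_bound as [G [HG0 HG]].
  destruct (ex_Iinf_kmoment kappa delta HK 1) as [l1 Hl1].
  apply (is_Iinf_dominated _ (fun s => G * kmoment kappa 1 s) (G * l1)).
  - apply ex_RInt_F1_integrand_dt.
  - intros; apply ex_RInt_scal_R, (ex_RInt_kmoment kappa delta HK); auto.
  - intros s Hs. apply (HG s t0 Hs). lra.
  - apply is_Iinf_scal, Hl1.
Qed.

Lemma is_derive_F1 :
  is_derive (F1 c kappa theta eta) t0 (- (2 * c / g0 kappa) * Iinf (fun s => F1_integrand_dt s t0)).
Proof.
  destruct F1_integrand_bound as [G [HG0 HG]].
  destruct (ex_Iinf_kmoment kappa delta HK 1) as [l1 Hl1].
  apply (is_derive_scal (fun t => Iinf (fun s => F1_integrand s t))).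
  apply (is_derive_Iinf_param F1_integrand F1_integrand_dt (fun s => G * kmoment kappa 1 s) (G * l1) t0 (t0 / 2)).
  - lra.
  - intros; apply is_derive_F1_integrand.
  - intros; apply F1_integrand_dt_continuous; auto.
  - intros tau _ b Hb. apply (ex_RInt_kernel_mult kappa delta HK); auto.
    intros s _. apply (continuous_RInt_param (fun x s => theta x tau * eta x s tau)); [left; apply PI_RGT_0|].
    apply jointly_continuous_mult; [apply cont2_at, C2_cont, Htheta | apply cont3_at, eta_regular_cont, Heta].
  - intros s tau Hs Ht. apply HG; auto.
  - intros; apply ex_RInt_scal_R, (ex_RInt_kmoment kappa delta HK); auto.
  - apply is_Iinf_scal, Hl1.
Qed.

Definition eta_x2 s := nrm2 (fun x => dx3 eta x s t0).

Definition dissipation := Iinf (fun s => Derive kappa s * eta_x2 s).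

Lemma jointly_continuous_eta_x2 :
  jointly_continuous (P := R_UniformSpace) (fun x s => dx3 eta x s t0 * dx3 eta x s t0).
Proof. apply jointly_continuous_mult; apply cont3_at, eta_regular_dx_cont, Heta. Qed.

Lemma eta_x2_continuous s : continuous eta_x2 s.
Proof.
  exact (continuous_RInt_param _ 0 PI s (Rlt_le _ _ PI_RGT_0) jointly_continuous_eta_x2).
Qed.

Lemma eta_x2_ge0 s : 0 <= eta_x2 s.
Proof.
  apply RInt_ge_0; [left; apply PI_RGT_0 | exact (jointly_continuous_ex_RInt _ s 0 PI jointly_continuous_eta_x2) |].
  intros x _. apply Rle_0_sqr.
Qed.

Lemma eta_x2_le_quadratic : exists C, forall s, 0 <= s -> eta_x2 s <= C * (1 + s) ^ 2.
Proof.
  destruct (eta_regular_bounds eta (2 * t0) Heta ltac:(lra)) as [B [HB0 HB]].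
  exists (PI * B ^ 2). intros s Hs.
  eapply Rle_trans; [apply Rle_abs|].
  eapply Rle_trans.
  { apply abs_RInt_le_const with (M := B ^ 2 * (1 + s) ^ 2); [left; apply PI_RGT_0 |
      exact (jointly_continuous_ex_RInt _ s 0 PI jointly_continuous_eta_x2) |].
    intros x Hx. assert (Hst : 0 < t0 <= 2 * t0) by lra.
    destruct (HB x s t0 Hx Hs Hst) as (_ & H2 & _). rewrite Rabs_mult.
    replace (B ^ 2 * (1 + s) ^ 2) with ((B * (1 + s)) * (B * (1 + s))) by ring.
    apply Rmult_le_compat; auto using Rabs_pos. }
  right. ring.
Qed.

Lemma is_Iinf_normV2 : is_Iinf (fun s => kappa s * eta_x2 s) (normV2 kappa eta t0).
Proof.
  destruct eta_x2_le_quadratic as [C HC].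
  destruct (ex_Iinf_kmoment kappa delta HK 2) as [l2 Hl2].
  apply (is_Iinf_dominated _ (fun s => C * kmoment kappa 2 s) (C * l2)).
  - intros b Hb. apply (ex_RInt_kernel_mult kappa delta HK); auto. intros; apply eta_x2_continuous.
  - intros; apply ex_RInt_scal_R, (ex_RInt_kmoment kappa delta HK); auto.
  - intros s Hs. pose proof (kernel_pos kappa delta HK s Hs). pose proof (eta_x2_ge0 s).
    rewrite Rabs_right by (apply Rle_ge, Rmult_le_pos; lra). unfold kmoment.
    replace (C * (kappa s * (1 + s) ^ 2)) with (kappa s * (C * (1 + s) ^ 2)) by ring.
    apply Rmult_le_compat_l; [lra | apply HC, Hs].
  - apply is_Iinf_scal, Hl2.
Qed.

Lemma is_Iinf_dissipation : is_Iinf (fun s => Derive kappa s * eta_x2 s) dissipation.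
Proof.
  destruct eta_x2_le_quadratic as [C HC].
  destruct (ex_Iinf_dkmoment_S kappa delta HK 1) as [l2 Hl2].
  apply (is_Iinf_dominated _ (fun s => C * dkmoment kappa 2 s) (C * l2)).
  - intros b Hb. apply (ex_RInt_kernel_Derive_mult kappa delta HK); auto. intros; apply eta_x2_continuous.
  - intros; apply ex_RInt_scal_R, (ex_RInt_dkmoment kappa delta HK); auto.
  - intros s Hs. pose proof (kernel_Derive_nonpos kappa delta HK s Hs). pose proof (eta_x2_ge0 s).
    rewrite Rabs_left1 by (apply Rmult_le_0_r; lra). unfold dkmoment.
    replace (C * (- Derive kappa s * (1 + s) ^ 2)) with (- Derive kappa s * (C * (1 + s) ^ 2)) by ring.
    rewrite Ropp_mult_distr_l. apply Rmult_le_compat_l; [lra | apply HC, Hs].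
  - apply is_Iinf_scal, Hl2.
Qed.

Lemma dissipation_nonpos : dissipation <= 0.
Proof.
  apply (is_Iinf_le (fun s => Derive kappa s * eta_x2 s) (fun _ => 0)); [| apply is_Iinf_dissipation | apply is_Iinf_0].
  intros s Hs. apply Rmult_le_0_r; [apply (kernel_Derive_nonpos kappa delta HK s Hs) | apply eta_x2_ge0].
Qed.

Lemma normV2_le_dissipation : delta * normV2 kappa eta t0 <= - dissipation.
Proof.
  replace (- dissipation) with (-1 * dissipation) by ring.
  apply (is_Iinf_le (fun s => delta * (kappa s * eta_x2 s)) (fun s => -1 * (Derive kappa s * eta_x2 s)));
    [| apply is_Iinf_scal, is_Iinf_normV2 | apply is_Iinf_scal, is_Iinf_dissipation].
  intros s Hs. pose proof (kernel_Derive_le kappa delta HK s Hs). pose proof (eta_x2_ge0 s).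
  rewrite <- !Rmult_assoc. apply Rmult_le_compat_r; lra.
Qed.

Definition memory_term x := Iinf (fun sg => kappa sg * dx3 (dx3 eta) x sg t0).

Definition memory_pairing s := RInt (fun x => memory_term x * eta x s t0) 0 PI.

Lemma is_Iinf_memory_term x : 0 <= x <= PI ->
  is_Iinf (fun sg => kappa sg * dx3 (dx3 eta) x sg t0) (memory_term x).
Proof.
  intros Hx. destruct (eta_regular_bounds eta (2 * t0) Heta ltac:(lra)) as [B [HB0 HB]].
  destruct (ex_Iinf_kmoment kappa delta HK 1) as [l1 Hl1].
  apply (is_Iinf_dominated _ (fun s => B * kmoment kappa 1 s) (B * l1)).
  - intros b Hb. apply (ex_RInt_kernel_mult kappa delta HK); auto. intros s _.
    exact (jointly_continuous_r _ x s (cont3_at _ t0 (eta_regular_dxx_cont eta Heta))).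
  - intros; apply ex_RInt_scal_R, (ex_RInt_kmoment kappa delta HK); auto.
  - intros s Hs. pose proof (kernel_pos kappa delta HK s Hs). assert (Hst : 0 < t0 <= 2 * t0) by lra.
    destruct (HB x s t0 Hx Hs Hst) as (_ & _ & H3 & _).
    rewrite Rabs_mult, (Rabs_right (kappa s)) by lra. unfold kmoment. rewrite pow_1.
    replace (B * (kappa s * (1 + s))) with (kappa s * (B * (1 + s))) by ring.
    apply Rmult_le_compat_l; lra.
  - apply is_Iinf_scal, Hl1.
Qed.

(* Clamping x to [0, PI] and sg to [0, +oo) extends the integrand continuously to the whole
   plane, as required by the interchange lemma. *)
Lemma memory_integrand_extension s : 0 <= s -> exists (k : R -> R -> R) (C : R),
  jointly_continuous (P := R_UniformSpace) k /\
  (forall x sg, 0 <= sg -> Rabs (k x sg) <= C * kmoment kappa 1 sg) /\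
  (forall x sg, 0 <= x <= PI -> 0 < sg -> k x sg = kappa sg * (dx3 (dx3 eta) x sg t0 * eta x s t0)).
Proof.
  intros Hs. pose proof PI_RGT_0 as Hpi.
  destruct (eta_regular_bounds eta (2 * t0) Heta ltac:(lra)) as [B [HB0 HB]].
  exists (fun x sg => kappa (Rmax 0 sg) * dx3 (dx3 eta) (clamp 0 PI x) sg t0 * eta (clamp 0 PI x) s t0),
    (B * B * (1 + s)).
  split; [|split].
  - intros x sg. apply continuous_mult_R; [apply continuous_mult_R|].
    + apply (continuous_comp (fun z : R * R => Rmax 0 (snd z)) kappa).
      * apply continuous_Rmax; [apply continuous_const | apply continuous_snd].
      * apply (kernel_continuous kappa delta HK), Rmax_l.
    + apply (cont3_comp _ (fun z : R * R => clamp 0 PI (fst z)) snd (fun _ => t0));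
        [apply eta_regular_dxx_cont, Heta | | apply continuous_snd | apply continuous_const].
      apply (continuous_comp fst (clamp 0 PI)); [apply continuous_fst | apply continuous_clamp].
    + apply (cont3_comp _ (fun z : R * R => clamp 0 PI (fst z)) (fun _ => s) (fun _ => t0));
        [apply eta_regular_cont, Heta | | apply continuous_const | apply continuous_const].
      apply (continuous_comp fst (clamp 0 PI)); [apply continuous_fst | apply continuous_clamp].
  - intros x sg Hsg. rewrite Rmax_right by lra. pose proof (kernel_pos kappa delta HK sg Hsg).
    assert (Hst : 0 < t0 <= 2 * t0) by lra.
    assert (Hx : 0 <= clamp 0 PI x <= PI) by (apply clamp_in; lra).
    destruct (HB _ sg t0 Hx Hsg Hst) as (_ & _ & H3 & _).
    destruct (HB _ s t0 Hx Hs Hst) as (H1 & _).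
    rewrite !Rabs_mult, (Rabs_right (kappa sg)) by lra. unfold kmoment. rewrite pow_1.
    replace (B * B * (1 + s) * (kappa sg * (1 + sg))) with (kappa sg * ((B * (1 + sg)) * (B * (1 + s)))) by ring.
    rewrite Rmult_assoc. apply Rmult_le_compat_l; [lra|]. apply Rmult_le_compat; auto using Rabs_pos.
  - intros x sg Hx Hsg. rewrite clamp_id, Rmax_right by lra. ring.
Qed.

Lemma memory_pairing_swap s : 0 <= s ->
  ex_RInt (fun x => memory_term x * eta x s t0) 0 PI /\
  is_Iinf (fun sg => kappa sg * RInt (fun x => dx3 (dx3 eta) x sg t0 * eta x s t0) 0 PI)
          (memory_pairing s).
Proof.
  intros Hs. pose proof PI_RGT_0 as Hpi.
  destruct (memory_integrand_extension s Hs) as (k & C & Hk & Hbound & Hk_in).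
  destruct (ex_Iinf_kmoment kappa delta HK 1) as [l1 Hl1].
  destruct (is_Iinf_RInt_swap k (fun sg => C * kmoment kappa 1 sg) (C * l1) 0 PI)
    as [Hex HIG]; [lra | exact Hk | | apply is_Iinf_scal, Hl1 | exact Hbound |].
  { intros; apply ex_RInt_scal_R, (ex_RInt_kmoment kappa delta HK); auto. }
  assert (E : forall x, Rmin 0 PI < x < Rmax 0 PI -> Iinf (k x) = memory_term x * eta x s t0).
  { intros x Hx. rewrite Rmin_left, Rmax_right in Hx by lra. apply is_Iinf_unique.
    apply (is_Iinf_ext (fun sg => eta x s t0 * (kappa sg * dx3 (dx3 eta) x sg t0))).
    - intros sg Hsg. rewrite Hk_in by lra. ring.
    - rewrite Rmult_comm. apply is_Iinf_scal, is_Iinf_memory_term. lra. }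
  split; [exact (ex_RInt_ext_R _ _ 0 PI E Hex)|].
  unfold memory_pairing. rewrite <- (RInt_ext_R _ _ 0 PI E).
  apply (is_Iinf_ext (fun sg => RInt (fun x => k x sg) 0 PI)); [|exact HIG].
  intros sg Hsg. rewrite <- RInt_scal_R.
  - apply RInt_ext_R. intros x Hx. rewrite Rmin_left, Rmax_right in Hx by lra. apply Hk_in; lra.
  - apply (ex_RInt_cont2_mult_cont3 (fun x t => dx3 (dx3 eta) x sg t) eta s t0).
    + intros x t. apply (cont3_in_t _ sg), eta_regular_dxx_cont, Heta.
    + apply eta_regular_cont, Heta.
Qed.

Lemma RInt_eta_xx_eta s sg : 0 <= s ->
  RInt (fun x => dx3 (dx3 eta) x sg t0 * eta x s t0) 0 PI
  = - ip (fun x => dx3 eta x sg t0) (fun x => dx3 eta x s t0).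
Proof.
  intros Hs. destruct (eta_bc s t0 Hs Ht0) as [H0 HPI].
  apply (RInt_parts_vanishing (fun x => dx3 eta x sg t0) (fun x => dx3 (dx3 eta) x sg t0)
           (fun x => eta x s t0) (fun x => dx3 eta x s t0)); auto.
  - intros x. apply Derive_correct, eta_regular_ex_derive_xx, Heta.
  - intros x. apply Derive_correct, eta_regular_ex_derive_x, Heta.
  - intros x. apply cont3_continuous_x, eta_regular_dxx_cont, Heta.
  - intros x. apply cont3_continuous_x, eta_regular_dx_cont, Heta.
Qed.

Lemma is_Iinf_eta_x_pairing s : 0 <= s ->
  is_Iinf (fun sg => kappa sg * ip (fun x => dx3 eta x sg t0) (fun x => dx3 eta x s t0))
          (- memory_pairing s).
Proof.
  intros Hs. destruct (memory_pairing_swap s Hs) as [_ H].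
  replace (- memory_pairing s) with (-1 * memory_pairing s) by ring.
  apply (is_Iinf_ext (fun sg => -1 * (kappa sg * RInt (fun x => dx3 (dx3 eta) x sg t0 * eta x s t0) 0 PI))).
  - intros sg _. rewrite RInt_eta_xx_eta by exact Hs. ring.
  - apply is_Iinf_scal, H.
Qed.

Definition theta2 := nrm2 (fun x => theta x t0).
Definition phi_t2 := nrm2 (fun x => dt phi x t0).
Definition theta_eta s := RInt (fun x => theta x t0 * eta x s t0) 0 PI.
Definition theta_eta_s s := RInt (fun x => theta x t0 * ds3 eta x s t0) 0 PI.
Definition phi_t_eta_x s := RInt (fun x => dt phi x t0 * dx3 eta x s t0) 0 PI.

Lemma RInt_theta_eta_t s : 0 < s ->
  RInt (fun x => theta x t0 * dt3 eta x s t0) 0 PI = theta2 - theta_eta_s s.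
Proof.
  intros Hs. pose proof PI_RGT_0.
  unfold theta2, theta_eta_s, nrm2, ip. rewrite <- RInt_minus_R.
  - apply RInt_ext_R. intros x Hx. rewrite Rmin_left, Rmax_right in Hx by lra.
    rewrite eta_eq by lra. ring.
  - apply ex_RInt_continuous_R. intros x _. apply continuous_sqr_R, cont2_continuous_x, C2_cont, Htheta.
  - apply ex_RInt_cont2_mult_cont3; [apply C2_cont, Htheta | apply eta_regular_ds_cont, Heta].
Qed.

Lemma RInt_phi_xt_eta s : 0 <= s ->
  RInt (fun x => dt (dx phi) x t0 * eta x s t0) 0 PI = - phi_t_eta_x s.
Proof.
  intros Hs. destruct (eta_bc s t0 Hs Ht0) as [H0 HPI].
  rewrite (RInt_ext_R _ (fun x => dx (dt phi) x t0 * eta x s t0))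
    by (intros; rewrite C2_dt_dx by exact Hphi; reflexivity).
  apply (RInt_parts_vanishing (fun x => dt phi x t0) (fun x => dx (dt phi) x t0)
           (fun x => eta x s t0) (fun x => dx3 eta x s t0)); auto.
  - intros x. apply Derive_correct, C2_dt_ex_derive_x, Hphi.
  - intros x. apply Derive_correct, eta_regular_ex_derive_x, Heta.
  - intros x. apply cont2_continuous_x, C2_dx_dt_cont, Hphi.
  - intros x. apply cont3_continuous_x, eta_regular_dx_cont, Heta.
Qed.

Lemma RInt_theta_t_eta s : 0 <= s ->
  c * RInt (fun x => dt theta x t0 * eta x s t0) 0 PI
  = - beta * RInt (fun x => dt (dx phi) x t0 * eta x s t0) 0 PI + memory_pairing s.
Proof.
  intros Hs. pose proof PI_RGT_0.
  destruct (memory_pairing_swap s Hs) as [Hex _].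
  assert (Hphi_eta : ex_RInt (fun x => dt (dx phi) x t0 * eta x s t0) 0 PI)
    by (apply ex_RInt_cont2_mult_cont3; [apply C2_dt_dx_cont, Hphi | apply eta_regular_cont, Heta]).
  rewrite <- RInt_scal_R
    by (apply ex_RInt_cont2_mult_cont3; [apply C2_dt_cont, Htheta | apply eta_regular_cont, Heta]).
  unfold memory_pairing. rewrite <- (RInt_scal_R _ (- beta)), <- RInt_plus_R by auto using ex_RInt_scal_R.
  apply RInt_ext_R. intros x Hx. rewrite Rmin_left, Rmax_right in Hx by lra.
  rewrite <- Rmult_assoc, theta_eq by lra. unfold memory_term. ring.
Qed.

Lemma F1_integrand_dt_identity s : 0 < s ->
  c * F1_integrand_dt s t0 + c * (kappa s * theta_eta_s s)
  = kappa s * (beta * phi_t_eta_x s + memory_pairing s + c * theta2).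
Proof.
  intros Hs. unfold F1_integrand_dt.
  rewrite RInt_plus_R, RInt_theta_eta_t by (auto; apply ex_RInt_cont2_mult_cont3;
    auto using C2_dt_cont, C2_cont, eta_regular_cont, eta_regular_dt_cont).
  replace (c * (kappa s * (RInt (fun x => dt theta x t0 * eta x s t0) 0 PI + (theta2 - theta_eta_s s)))
           + c * (kappa s * theta_eta_s s))
    with (kappa s * (c * RInt (fun x => dt theta x t0 * eta x s t0) 0 PI + c * theta2)) by ring.
  rewrite RInt_theta_t_eta, RInt_phi_xt_eta by lra. ring.
Qed.

Lemma jointly_continuous_theta_eta :
  jointly_continuous (P := R_UniformSpace) (fun x s => theta x t0 * eta x s t0).
Proof.
  apply jointly_continuous_mult; [apply cont2_at, C2_cont, Htheta | apply cont3_at, eta_regular_cont, Heta].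
Qed.

Lemma jointly_continuous_theta_eta_s :
  jointly_continuous (P := R_UniformSpace) (fun x s => theta x t0 * ds3 eta x s t0).
Proof.
  apply jointly_continuous_mult; [apply cont2_at, C2_cont, Htheta | apply cont3_at, eta_regular_ds_cont, Heta].
Qed.

Lemma theta_eta_continuous s : continuous theta_eta s.
Proof. exact (continuous_RInt_param _ 0 PI s (Rlt_le _ _ PI_RGT_0) jointly_continuous_theta_eta). Qed.

Lemma theta_eta_s_continuous s : continuous theta_eta_s s.
Proof. exact (continuous_RInt_param _ 0 PI s (Rlt_le _ _ PI_RGT_0) jointly_continuous_theta_eta_s). Qed.

Lemma is_derive_theta_eta s : is_derive theta_eta s (theta_eta_s s).
Proof.
  unfold theta_eta, theta_eta_s.
  assert (HD : forall x z, Derive (fun u => theta x t0 * eta x u t0) z = theta x t0 * ds3 eta x z t0)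
    by (intros; apply Derive_scal).
  rewrite (RInt_ext_R _ (fun x => Derive (fun u => theta x t0 * eta x u t0) s))
    by (intros; rewrite HD; reflexivity).
  apply (is_derive_RInt_param (fun z x => theta x t0 * eta x z t0) 0 PI s).
  - apply filter_forall. intros z t _.
    apply (ex_derive_scal (fun u => eta t u t0)), eta_regular_ex_derive_s, Heta.
  - intros t _. apply continuity_2d_pt_ext with (fun u v => theta v t0 * ds3 eta v u t0).
    + intros; rewrite HD; reflexivity.
    + apply jointly_continuous_2d, jointly_continuous_swap, jointly_continuous_theta_eta_s.
  - apply filter_forall. intros z. exact (jointly_continuous_ex_RInt _ z 0 PI jointly_continuous_theta_eta).
Qed.

Lemma theta_eta_0 : theta_eta 0 = 0.
Proof.
  unfold theta_eta. rewrite (RInt_ext_R _ (fun _ => 0)) by (intros; rewrite eta_0 by exact Ht0; ring).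
  rewrite RInt_const_R. apply Rmult_0_r.
Qed.

(* Integration by parts in s, using eta(x, 0) = 0. *)
Lemma RInt_kernel_theta_eta Y : 0 <= Y ->
  RInt (fun s => Derive kappa s * theta_eta s) 0 Y + RInt (fun s => kappa s * theta_eta_s s) 0 Y
  = kappa Y * theta_eta Y.
Proof.
  intros HY.
  rewrite <- RInt_plus_R.
  2: apply (ex_RInt_kernel_Derive_mult kappa delta HK); auto using theta_eta_continuous.
  2: apply (ex_RInt_kernel_mult kappa delta HK); auto using theta_eta_s_continuous.
  rewrite (RInt_derive_R (fun s => kappa s * theta_eta s)); [rewrite theta_eta_0; ring | |];
    intros x Hx; rewrite Rmin_left, Rmax_right in Hx by lra.
  - apply is_derive_mult_R; [apply Derive_correct, (kernel_ex_derive kappa delta HK) | apply is_derive_theta_eta]. lra.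
  - apply continuous_plus_R; apply continuous_mult_R.
    + apply (kernel_Derive_continuous kappa delta HK). lra.
    + apply theta_eta_continuous.
    + apply (kernel_continuous kappa delta HK). lra.
    + apply theta_eta_s_continuous.
Qed.

Lemma theta2_ge0 : 0 <= theta2.
Proof.
  apply RInt_ge_0; [left; apply PI_RGT_0 | | intros; apply Rle_0_sqr].
  apply ex_RInt_continuous_R. intros x _. apply continuous_sqr_R, cont2_continuous_x, C2_cont, Htheta.
Qed.

Lemma phi_t_eta_x_bound bb s : 0 < bb -> Rabs (phi_t_eta_x s) <= (bb * phi_t2 + eta_x2 s / bb) / 2.
Proof.
  intros Hb. apply (RInt_mult_le_Young (fun x => dt phi x t0) (fun x => dx3 eta x s t0) bb 0 PI Hb).
  - left; apply PI_RGT_0.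
  - intros x. apply cont2_continuous_x, C2_dt_cont, Hphi.
  - intros x. apply cont3_continuous_x, eta_regular_dx_cont, Heta.
Qed.

Lemma ip_eta_x_le sg s : ip (fun x => dx3 eta x sg t0) (fun x => dx3 eta x s t0) <= (eta_x2 sg + eta_x2 s) / 2.
Proof.
  eapply Rle_trans; [apply Rle_abs|].
  eapply Rle_trans.
  { apply (RInt_mult_le_Young (fun x => dx3 eta x sg t0) (fun x => dx3 eta x s t0) 1 0 PI Rlt_0_1).
    - left; apply PI_RGT_0.
    - intros x. apply cont3_continuous_x, eta_regular_dx_cont, Heta.
    - intros x. apply cont3_continuous_x, eta_regular_dx_cont, Heta. }
  right. unfold eta_x2, nrm2, ip. field.
Qed.

Lemma theta_eta_le a s : 0 < a -> 0 <= s -> theta_eta s <= (a * theta2 + PI ^ 2 * eta_x2 s / a) / 2.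
Proof.
  intros Ha Hs. pose proof PI_RGT_0. eapply Rle_trans; [apply Rle_abs|].
  eapply Rle_trans.
  { apply (RInt_mult_le_Young (fun x => theta x t0) (fun x => eta x s t0) a 0 PI Ha); [lra | |].
    - intros x. apply cont2_continuous_x, C2_cont, Htheta.
    - intros x. apply cont3_continuous_x, eta_regular_cont, Heta. }
  assert (Hp : RInt (fun x => eta x s t0 * eta x s t0) 0 PI <= PI ^ 2 * eta_x2 s).
  { replace (PI ^ 2) with ((PI - 0) ^ 2) by ring.
    apply (Poincare (fun x => eta x s t0) (fun x => dx3 eta x s t0)); [lra | | | apply eta_bc; auto].
    - intros x. apply Derive_correct, eta_regular_ex_derive_x, Heta.
    - intros x. apply cont3_continuous_x, eta_regular_dx_cont, Heta. }
  apply Rmult_le_compat_r; [lra|]. apply Rplus_le_compat_l.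
  unfold Rdiv. apply Rmult_le_compat_r; [left; apply Rinv_0_lt_compat, Ha | exact Hp].
Qed.

Lemma theta_eta_linear_bound : exists A, 0 <= A /\ forall Y, 0 <= Y -> Rabs (theta_eta Y) <= A * (1 + Y).
Proof.
  destruct (eta_regular_bounds eta (2 * t0) Heta ltac:(lra)) as [B [HB0 HB]].
  set (L := RInt (fun x => Rabs (theta x t0)) 0 PI).
  assert (HLe : ex_RInt (fun x => Rabs (theta x t0)) 0 PI).
  { apply ex_RInt_continuous_R. intros x _. apply continuous_abs_R, cont2_continuous_x, C2_cont, Htheta. }
  assert (HL0 : 0 <= L) by (apply RInt_ge_0; [left; apply PI_RGT_0 | exact HLe | intros; apply Rabs_pos]).
  exists (B * L). split; [apply Rmult_le_pos; auto|].
  intros Y HY. unfold theta_eta.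
  eapply Rle_trans.
  { apply (abs_RInt_le_RInt _ (fun x => B * (1 + Y) * Rabs (theta x t0))); [left; apply PI_RGT_0 |
      exact (jointly_continuous_ex_RInt _ Y 0 PI jointly_continuous_theta_eta) | apply ex_RInt_scal_R, HLe |].
    intros x Hx. assert (Hst : 0 < t0 <= 2 * t0) by lra.
    destruct (HB x Y t0 Hx HY Hst) as [H1 _]. rewrite Rabs_mult, (Rmult_comm (B * (1 + Y))).
    apply Rmult_le_compat_l; [apply Rabs_pos | exact H1]. }
  rewrite RInt_scal_R by exact HLe. right. fold L. ring.
Qed.

Lemma memory_pairing_lower s : 0 <= s ->
  - memory_pairing s <= normV2 kappa eta t0 / 2 + eta_x2 s / 2 * g0 kappa.
Proof.
  intros Hs.
  apply (is_Iinf_le (fun sg => kappa sg * ip (fun x => dx3 eta x sg t0) (fun x => dx3 eta x s t0))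
           (fun sg => / 2 * (kappa sg * eta_x2 sg) + eta_x2 s / 2 * kappa sg));
    [| apply is_Iinf_eta_x_pairing, Hs |].
  - intros sg Hsg. pose proof (kernel_pos kappa delta HK sg Hsg). pose proof (ip_eta_x_le sg s).
    replace (/ 2 * (kappa sg * eta_x2 sg) + eta_x2 s / 2 * kappa sg)
      with (kappa sg * ((eta_x2 sg + eta_x2 s) / 2)) by field.
    apply Rmult_le_compat_l; lra.
  - replace (normV2 kappa eta t0 / 2 + eta_x2 s / 2 * g0 kappa)
      with (/ 2 * normV2 kappa eta t0 + eta_x2 s / 2 * g0 kappa) by field.
    apply is_Iinf_plus; apply is_Iinf_scal; [apply is_Iinf_normV2 | apply (is_Iinf_kernel kappa delta HK)].
Qed.

Lemma F1_integrand_dt_lower bb s : 0 < bb -> 0 < s ->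
  (c * theta2 - Rabs beta * bb / 2 * phi_t2 - normV2 kappa eta t0 / 2) * kappa s
  - (Rabs beta / (2 * bb) + g0 kappa / 2) * (kappa s * eta_x2 s)
  <= c * F1_integrand_dt s t0 + c * (kappa s * theta_eta_s s).
Proof.
  intros Hbb Hs. rewrite F1_integrand_dt_identity by exact Hs.
  pose proof (kernel_pos kappa delta HK s ltac:(lra)) as Hk.
  pose proof (memory_pairing_lower s ltac:(lra)) as HR.
  assert (HbE : - (Rabs beta * ((bb * phi_t2 + eta_x2 s / bb) / 2)) <= beta * phi_t_eta_x s).
  { assert (Rabs (beta * phi_t_eta_x s) <= Rabs beta * ((bb * phi_t2 + eta_x2 s / bb) / 2))
      by (rewrite Rabs_mult; apply Rmult_le_compat_l; [apply Rabs_pos | apply phi_t_eta_x_bound, Hbb]).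
    pose proof (Rle_abs (- (beta * phi_t_eta_x s))) as Hx. rewrite Rabs_Ropp in Hx. lra. }
  replace ((c * theta2 - Rabs beta * bb / 2 * phi_t2 - normV2 kappa eta t0 / 2) * kappa s
           - (Rabs beta / (2 * bb) + g0 kappa / 2) * (kappa s * eta_x2 s))
    with (kappa s * (- (Rabs beta * ((bb * phi_t2 + eta_x2 s / bb) / 2))
                     - (normV2 kappa eta t0 / 2 + eta_x2 s / 2 * g0 kappa) + c * theta2))
    by (field; lra).
  apply Rmult_le_compat_l; lra.
Qed.

Lemma RInt_kernel_Derive_theta_eta_lower a Y : 0 < a -> 0 <= Y ->
  a * theta2 / 2 * (kappa Y - kappa 0) + PI ^ 2 / (2 * a) * RInt (fun s => Derive kappa s * eta_x2 s) 0 Y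
  <= RInt (fun s => Derive kappa s * theta_eta s) 0 Y.
Proof.
  intros Ha HY.
  assert (HN : ex_RInt (fun s => Derive kappa s * eta_x2 s) 0 Y)
    by (apply (ex_RInt_kernel_Derive_mult kappa delta HK); auto using eta_x2_continuous).
  assert (HD : ex_RInt (Derive kappa) 0 Y).
  { apply (ex_RInt_ext_R (fun s => Derive kappa s * 1)); [intros; ring|].
    apply (ex_RInt_kernel_Derive_mult kappa delta HK); auto using continuous_const. }
  rewrite <- (RInt_kernel_Derive kappa delta HK Y HY).
  rewrite <- (RInt_scal_R (Derive kappa)), <- (RInt_scal_R (fun s => Derive kappa s * eta_x2 s)),
    <- RInt_plus_R by auto using ex_RInt_scal_R.
  apply RInt_le; [exact HY | apply ex_RInt_plus_R; apply ex_RInt_scal_R; auto | |].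
  - apply (ex_RInt_kernel_Derive_mult kappa delta HK); auto using theta_eta_continuous.
  - intros x Hx. pose proof (kernel_Derive_nonpos kappa delta HK x ltac:(lra)).
    pose proof (theta_eta_le a x Ha ltac:(lra)).
    replace (a * theta2 / 2 * Derive kappa x + PI ^ 2 / (2 * a) * (Derive kappa x * eta_x2 x))
      with (Derive kappa x * ((a * theta2 + PI ^ 2 * eta_x2 x / a) / 2)) by (field; lra).
    apply Rmult_le_compat_neg_l; lra.
Qed.

Lemma RInt_F1_integrand_dt_lower a bb Y : 0 < a -> 0 < bb -> 0 <= Y ->
  (c * theta2 - Rabs beta * bb / 2 * phi_t2 - normV2 kappa eta t0 / 2) * RInt kappa 0 Y
  - (Rabs beta / (2 * bb) + g0 kappa / 2) * RInt (fun s => kappa s * eta_x2 s) 0 Y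
  - c * a * theta2 / 2 * kappa 0 + c * PI ^ 2 / (2 * a) * RInt (fun s => Derive kappa s * eta_x2 s) 0 Y
  - c * (kappa Y * theta_eta Y)
  <= c * RInt (fun s => F1_integrand_dt s t0) 0 Y.
Proof.
  intros Ha Hbb HY.
  assert (eK : ex_RInt kappa 0 Y) by (apply (ex_RInt_kernel kappa delta HK), HY).
  assert (eKN : ex_RInt (fun s => kappa s * eta_x2 s) 0 Y)
    by (apply (ex_RInt_kernel_mult kappa delta HK); auto using eta_x2_continuous).
  assert (eKP : ex_RInt (fun s => kappa s * theta_eta_s s) 0 Y)
    by (apply (ex_RInt_kernel_mult kappa delta HK); auto using theta_eta_s_continuous).
  assert (eH : ex_RInt (fun s => F1_integrand_dt s t0) 0 Y) by (apply ex_RInt_F1_integrand_dt, HY).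
  set (A1 := c * theta2 - Rabs beta * bb / 2 * phi_t2 - normV2 kappa eta t0 / 2).
  set (A2 := Rabs beta / (2 * bb) + g0 kappa / 2).
  assert (H1 : A1 * RInt kappa 0 Y - A2 * RInt (fun s => kappa s * eta_x2 s) 0 Y
               <= c * RInt (fun s => F1_integrand_dt s t0) 0 Y + c * RInt (fun s => kappa s * theta_eta_s s) 0 Y).
  { rewrite <- (RInt_scal_R kappa), <- (RInt_scal_R (fun s => kappa s * eta_x2 s)), <- RInt_minus_R
      by auto using ex_RInt_scal_R.
    rewrite <- (RInt_scal_R (fun s => F1_integrand_dt s t0)), <- (RInt_scal_R (fun s => kappa s * theta_eta_s s)),
      <- RInt_plus_R by auto using ex_RInt_scal_R.
    apply RInt_le; [exact HY | apply ex_RInt_minus_R | apply ex_RInt_plus_R |]; auto using ex_RInt_scal_R.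
    intros s Hs. apply F1_integrand_dt_lower; lra. }
  pose proof (RInt_kernel_theta_eta Y HY) as H2.
  pose proof (RInt_kernel_Derive_theta_eta_lower a Y Ha HY) as H3.
  assert (H4 : 0 <= c * (a * theta2 / 2 * kappa Y)).
  { pose proof theta2_ge0. pose proof (kernel_pos kappa delta HK Y HY).
    apply Rmult_le_pos; [lra|]. apply Rmult_le_pos; [|lra]. unfold Rdiv. apply Rmult_le_pos; [nra | lra]. }
  assert (H3c := Rmult_le_compat_l c _ _ (Rlt_le _ _ Hc) H3).
  revert H1 H2 H3c H4.
  generalize (RInt (fun s => F1_integrand_dt s t0) 0 Y) (RInt (fun s => kappa s * theta_eta_s s) 0 Y)
    (RInt (fun s => Derive kappa s * theta_eta s) 0 Y) (RInt (fun s => Derive kappa s * eta_x2 s) 0 Y).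
  intros IH IP ID IN H1 H2 H3c H4.
  replace (c * PI ^ 2 / (2 * a) * IN) with (c * (PI ^ 2 / (2 * a) * IN)) by (field; lra).
  replace (c * a * theta2 / 2 * kappa 0) with (c * (a * theta2 / 2 * kappa 0)) by field.
  nra.
Qed.

Lemma kernel_theta_eta_lim : filterlim (fun Y => c * (kappa Y * theta_eta Y)) pinf (locally 0).
Proof.
  destruct theta_eta_linear_bound as [A [HA0 HA]].
  apply (filterlim_squeeze_0 _ (fun Y => kappa Y * (1 + Y)) (c * A)); [apply (kernel_linear_lim kappa delta HK)|].
  generalize (p_infty_ge 0). apply filter_imp. intros Y HY.
  pose proof (kernel_pos kappa delta HK Y HY). specialize (HA Y HY).
  rewrite (Rabs_right (kappa Y * (1 + Y))) by nra.
  rewrite !Rabs_mult, (Rabs_right c), (Rabs_right (kappa Y)) by lra.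
  replace (c * A * (kappa Y * (1 + Y))) with (c * (kappa Y * (A * (1 + Y)))) by ring.
  apply Rmult_le_compat_l; [lra|]. apply Rmult_le_compat_l; lra.
Qed.

Lemma Iinf_F1_integrand_dt_lower a bb : 0 < a -> 0 < bb ->
  (c * theta2 - Rabs beta * bb / 2 * phi_t2 - normV2 kappa eta t0 / 2) * g0 kappa
  - (Rabs beta / (2 * bb) + g0 kappa / 2) * normV2 kappa eta t0
  - c * a * theta2 / 2 * kappa 0 + c * PI ^ 2 / (2 * a) * dissipation
  <= c * Iinf (fun s => F1_integrand_dt s t0).
Proof.
  intros Ha Hbb.
  set (A1 := c * theta2 - Rabs beta * bb / 2 * phi_t2 - normV2 kappa eta t0 / 2).
  set (A2 := Rabs beta / (2 * bb) + g0 kappa / 2).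
  apply (filterlim_le_R
    (fun Y => A1 * RInt kappa 0 Y - A2 * RInt (fun s => kappa s * eta_x2 s) 0 Y
              - c * a * theta2 / 2 * kappa 0 + c * PI ^ 2 / (2 * a) * RInt (fun s => Derive kappa s * eta_x2 s) 0 Y
              - c * (kappa Y * theta_eta Y))
    (fun Y => c * RInt (fun s => F1_integrand_dt s t0) 0 Y)).
  - replace (A1 * g0 kappa - A2 * normV2 kappa eta t0 - c * a * theta2 / 2 * kappa 0 + c * PI ^ 2 / (2 * a) * dissipation)
      with (A1 * g0 kappa - A2 * normV2 kappa eta t0 - c * a * theta2 / 2 * kappa 0 + c * PI ^ 2 / (2 * a) * dissipation - 0)
      by ring.
    apply filterlim_minus_R; [|apply kernel_theta_eta_lim].
    apply filterlim_plus_R; [apply filterlim_minus_R; [apply filterlim_minus_R|apply filterlim_const] |].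
    + apply filterlim_scal_R, is_Iinf_lim_RInt, (is_Iinf_kernel kappa delta HK).
    + apply filterlim_scal_R, is_Iinf_lim_RInt, is_Iinf_normV2.
    + apply filterlim_scal_R, is_Iinf_lim_RInt, is_Iinf_dissipation.
  - apply filterlim_scal_R, is_Iinf_lim_RInt, is_Iinf_F1_integrand_dt.
  - generalize (p_infty_ge 0). apply filter_imp. intros Y HY. apply RInt_F1_integrand_dt_lower; auto.
Qed.

Lemma F1_derivative_bound eps : 0 < eps -> beta <> 0 ->
  ex_derive (F1 c kappa theta eta) t0 /\
  Derive (F1 c kappa theta eta) t0 <= - c * theta2 - normV2 kappa eta t0 + eps * phi_t2
    - F1_constant c beta delta kappa * (1 + / eps) * dissipation.
Proof.
  intros He Hb.
  pose proof (g0_pos kappa delta HK). pose proof (kernel_pos kappa delta HK 0 (Rle_refl 0)).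
  split; [eexists; apply is_derive_F1|].
  rewrite (is_derive_unique _ _ _ is_derive_F1).
  apply F1_bound_arith; auto using theta2_ge0, dissipation_nonpos, normV2_le_dissipation.
  - apply (kernel_delta_pos kappa delta HK).
  - apply Iinf_F1_integrand_dt_lower; [apply Rdiv_lt_0_compat | apply Rdiv_lt_0_compat, Rabs_pos_lt]; lra.
Qed.

End Solution.

Theorem lemma5 (rho J c mu b alpha xi beta delta : R) (kappa : R -> R) :
  0 < rho -> 0 < J -> 0 < c -> 0 < mu -> 0 < b -> 0 < alpha -> 0 < xi ->
  mu * xi > b ^ 2 -> beta <> 0 ->
  kernel_hyp kappa delta ->
  exists M : R, 0 < M /\
    forall (u phi theta : R -> R -> R) (eta : R -> R -> R -> R),
      is_solution rho J c mu b alpha xi beta kappa u phi theta eta ->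
      forall eps1 : R, 0 < eps1 ->
      forall t : R, 0 < t ->
        ex_derive (F1 c kappa theta eta) t /\
        Derive (F1 c kappa theta eta) t <=
          - c * nrm2 (fun x => theta x t)
          - normV2 kappa eta t
          + eps1 * nrm2 (fun x => dt phi x t)
          - M * (1 + / eps1) *
              Iinf (fun s => Derive kappa s * nrm2 (fun x => dx3 eta x s t)).
Proof.
  intros _ _ Hc _ _ _ _ _ Hbeta HK.
  exists (F1_constant c beta delta kappa). split; [apply F1_constant_pos; auto|].
  intros u phi theta eta (_ & Hphi & Htheta & Heta & _ & _ & Htheta_eq & Heta_eq & _ & Hbc & H0)
    eps1 Heps1 t Ht.
  exact (F1_derivative_bound c beta delta kappa phi theta eta Hc HK Hphi Htheta Heta
           Htheta_eq Heta_eq Hbc H0 t Ht eps1 Heps1 Hbeta).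
Qed.
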